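(* Assume Hypotheses 1, 2 and 3 (see context), and let $h:K\to\mathbb{R}^n$ be the function with $\Gamma=\{(h(z),z):z\in K\}$. Then $h$ is differentiable at every $z\in K$, and $Dh(z)=H(h(z),z)$ for all $z\in K$.
   Context: System $\dot x=F(x)$ with $F=(f,g)$, i.e. $\dot a=f(a,z)$, $\dot z=g(a,z)$, $(a,z)\in\mathbb{R}^n\times\mathbb{R}^m$, $X=\mathbb{R}^n\times\mathbb{R}^m$, flow $\Phi(t,x)$. Euclidean inner product, norm, operator norm. $\mathcal{L}(x_1,x_2)=\|a_2-a_1\|^2-\|z_2-z_1\|^2$, $\mathcal{C}(x)=\{x'\in X:\mathcal{L}(x',x)\ge0\}$, $\mathbf{0}$ the zero vector of $X$; $\Pi(a,z)=a$, $\Pi_\perp(a,z)=z$; $\mathbb{B}_d(x)=\{(a',z'):\|a'-a\|\le d,\|z'-z\|\le d\}$. $\Gamma\subseteq U$ positively invariant means $\Phi(t,x)$ is defined for all $t\ge0$ for $x\in\Gamma$ and $\Phi(t,\Gamma)\subseteq\Gamma$. Hypothesis 1: $U$ open and convex, and there is $d>0$ with $\mathcal{C}(x)\cap U\subset\mathbb{B}_d(x)$ for all $x\in U$. Hypothesis 2: $f,g$ are $C^1$ on $U$; there exist continuous $\alpha>0$, $\ell\ge0$ on $U$ and $c_1>0$ with, for all $x\in U$: $\langle a',D_af(x)a'\rangle\ge\alpha(x)\|a'\|^2$; $\langle z',D_zg(x)z'\rangle\le\ell(x)\|z'\|^2$; $\alpha(x)\ge\ell(x)+\|D_zf(x)\|+\|D_ag(x)\|+c_1$.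 Hypothesis 3: $\Gamma\subset U$ is positively invariant and $\Pi_\perp(\Gamma)=\Pi_\perp(U)$. Let $K:=\Pi_\perp(U)$; under these hypotheses $\Gamma$ is the graph of a function $h:K\to\mathbb{R}^n$ with $\|h(z_2)-h(z_1)\|<\|z_2-z_1\|$ for $z_1\ne z_2$. For $x\in\Gamma$, $Q(t,x)$ ($t\ge0$) denotes the fundamental matrix solution of $\dot{\mathbf{x}}=DF(\Phi(t,x))\mathbf{x}$ with $Q(0,x)=I$, and $T(x):=\{\mathbf{x}\in X: \mathcal{L}(Q(t,x)\mathbf{x},\mathbf{0})\le0\text{ for all }t\ge0\}$. Under these hypotheses each $T(x)$ is the graph of a unique linear map $H(x):\mathbb{R}^m\to\mathbb{R}^n$, i.e. $T(x)=\{(H(x)\mathbf{z},\mathbf{z}):\mathbf{z}\in\mathbb{R}^m\}$. *)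

From Stdlib Require Fin.
From Stdlib Require Import Reals Lra ClassicalEpsilon.
Open Scope R_scope.

Definition vec (n : nat) := Fin.t n -> R.
Definition mat (k n : nat) := Fin.t k -> Fin.t n -> R.

Fixpoint vsum (n : nat) : (Fin.t n -> R) -> R :=
  match n return (Fin.t n -> R) -> R with
  | O => fun _ => 0
  | S k => fun f => f Fin.F1 + vsum k (fun i => f (Fin.FS i))
  end.

Definition vzero {n} : vec n := fun _ => 0.
Definition vadd {n} (u v : vec n) : vec n := fun i => u i + v i.
Definition vsub {n} (u v : vec n) : vec n := fun i => u i - v i.
Definition vscale {n} (c : R) (u : vec n) : vec n := fun i => c * u i.
Definition inner {n} (u v : vec n) : R := vsum n (fun i => u i * v i).
Definition vnorm {n} (u : vec n) : R := sqrt (inner u u).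
Definition mapply {k n} (M : mat k n) (v : vec n) : vec k :=
  fun i => vsum n (fun j => M i j * v j).

Definition opnorm {k n} (M : mat k n) : R :=
  epsilon (inhabits 0)
    (fun r => is_lub (fun y => exists v : vec n, vnorm v <= 1 /\ y = vnorm (mapply M v)) r).

Definition X (n m : nat) := (vec n * vec m)%type.
Definition Xadd {n m} (x y : X n m) : X n m := (vadd (fst x) (fst y), vadd (snd x) (snd y)).
Definition Xsub {n m} (x y : X n m) : X n m := (vsub (fst x) (fst y), vsub (snd x) (snd y)).
Definition Xscale {n m} (c : R) (x : X n m) : X n m := (vscale c (fst x), vscale c (snd x)).
Definition Xzero {n m} : X n m := (vzero, vzero).
Definition Xnorm {n m} (x : X n m) : R :=
  sqrt (inner (fst x) (fst x) + inner (snd x) (snd x)).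

Definition Lf {n m} (x1 x2 : X n m) : R :=
  vnorm (vsub (fst x2) (fst x1)) ^ 2 - vnorm (vsub (snd x2) (snd x1)) ^ 2.
Definition Ccone {n m} (x : X n m) (x' : X n m) : Prop := Lf x' x >= 0.
Definition Bbox {n m} (d : R) (x : X n m) (x' : X n m) : Prop :=
  vnorm (vsub (fst x') (fst x)) <= d /\ vnorm (vsub (snd x') (snd x)) <= d.

Definition is_open {n m} (U : X n m -> Prop) : Prop :=
  forall x, U x -> exists r, r > 0 /\ forall y, Xnorm (Xsub y x) < r -> U y.
Definition is_convex {n m} (U : X n m -> Prop) : Prop :=
  forall x y s, U x -> U y -> 0 <= s <= 1 -> U (Xadd (Xscale (1 - s) x) (Xscale s y)).

Definition cont_on {n m} (U : X n m -> Prop) (phi : X n m -> R) : Prop :=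
  forall x, U x -> forall eps, eps > 0 -> exists del, del > 0 /\
    forall y, U y -> Xnorm (Xsub y x) < del -> Rabs (phi y - phi x) < eps.
Definition mcont_on {n m k l} (U : X n m -> Prop) (M : X n m -> mat k l) : Prop :=
  forall i j, cont_on U (fun x => M x i j).

(* Frechet derivative of phi : X -> R^k at x is the linear map
   (u_a,u_z) |-> A u_a + B u_z, i.e. D_a phi(x) = A, D_z phi(x) = B *)
Definition has_partials {n m k} (phi : X n m -> vec k) (x : X n m)
    (A : mat k n) (B : mat k m) : Prop :=
  forall eps, eps > 0 -> exists del, del > 0 /\ forall u : X n m, Xnorm u < del ->
    vnorm (vsub (vsub (phi (Xadd x u)) (phi x))
                (vadd (mapply A (fst u)) (mapply B (snd u)))) <= eps * Xnorm u.

Definition frechet_deriv {m n} (h : vec m -> vec n) (z : vec m) (M : mat n m) : Prop :=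
  forall eps, eps > 0 -> exists del, del > 0 /\ forall w : vec m, vnorm w < del ->
    vnorm (vsub (vsub (h (vadd z w)) (h z)) (mapply M w)) <= eps * vnorm w.

Definition curve_deriv {n m} (gamma : R -> X n m) (t : R) (v : X n m) : Prop :=
  forall eps, eps > 0 -> exists del, del > 0 /\ forall s, s >= 0 -> Rabs (s - t) < del ->
    Xnorm (Xsub (Xsub (gamma s) (gamma t)) (Xscale (s - t) v)) <= eps * Rabs (s - t).

Definition forward_solution {n m} (f : X n m -> vec n) (g : X n m -> vec m)
    (x0 : X n m) (phi : R -> X n m) : Prop :=
  phi 0 = x0 /\ forall t, t >= 0 -> curve_deriv phi t (f (phi t), g (phi t)).

(* Gamma positively invariant: for x in Gamma, the flow Phi(t,x) exists for
   all t >= 0 and stays in Gamma (the forward solution is unique since F is C^1 on U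
   and Gamma is a subset of U) *)
Definition pos_invariant {n m} (f : X n m -> vec n) (g : X n m -> vec m)
    (Gam : X n m -> Prop) : Prop :=
  forall x, Gam x -> exists phi, forward_solution f g x phi /\ forall t, t >= 0 -> Gam (phi t).

Definition DF_apply {n m} (fa : X n m -> mat n n) (fz : X n m -> mat n m)
    (ga : X n m -> mat m n) (gz : X n m -> mat m m) (x : X n m) (v : X n m) : X n m :=
  (vadd (mapply (fa x) (fst v)) (mapply (fz x) (snd v)),
   vadd (mapply (ga x) (fst v)) (mapply (gz x) (snd v))).

(* T(x) = { v : L(Q(t,x) v, 0) <= 0 for all t >= 0 }, where Q(t,x) v is the solution y
   of the variational equation y' = DF(Phi(t,x)) y, y(0) = v, along the trajectory *)
Definition in_T {n m} (f : X n m -> vec n) (g : X n m -> vec m)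
    (fa : X n m -> mat n n) (fz : X n m -> mat n m)
    (ga : X n m -> mat m n) (gz : X n m -> mat m m) (x : X n m) (v : X n m) : Prop :=
  forall phi : R -> X n m, forward_solution f g x phi ->
  forall y : R -> X n m, y 0 = v ->
    (forall t, t >= 0 -> curve_deriv y t (DF_apply fa fz ga gz (phi t) (y t))) ->
    forall t, t >= 0 -> Lf (y t) Xzero <= 0.

(* Strategy.  (1) Cone invariance: for two orbits in U, the Lorentz form
   q = L of their difference satisfies q' >= 2 c1 q whenever q >= 0 (mean value
   theorem plus the dominated splitting of Hypothesis 2); as Hypothesis 1
   bounds q by d^2 on Gamma, any two points of Gamma satisfy L <= 0, so h is
   1-Lipschitz.  (2) Linearization of the flow: by Gronwall estimates in a tube
   around a compact piece of an orbit, a solution starting at phi0(0) + c (y(0)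
   + o(1)) is at phi0(T) + c (y(T) + o(1)), y solving the variational equation.
   (3) If h were not differentiable at z with derivative H(h z, z), a
   Bolzano-Weierstrass limit of normalized secants of Gamma would give a
   tangent vector v off the graph of H; by (2) and (1) every tangent vector of
   Gamma lies in T, i.e. on that graph -- a contradiction. *)

From Pilot Require Import Defs.
From Stdlib Require Import Reals Lra Classical ClassicalEpsilon FunctionalExtensionality Lia.
Open Scope R_scope.

Lemma vsum_ext n (f g : Fin.t n -> R) : (forall i, f i = g i) -> vsum n f = vsum n g.
Proof.
  induction n; simpl; intros H; [reflexivity|].
  rewrite H, (IHn (fun i => f (Fin.FS i)) (fun i => g (Fin.FS i))); auto.
Qed.

Lemma vsum_add n (f g : Fin.t n -> R) : vsum n (fun i => f i + g i) = vsum n f + vsum n g.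
Proof.
  induction n; simpl; [lra|].
  rewrite (IHn (fun i => f (Fin.FS i)) (fun i => g (Fin.FS i))); lra.
Qed.

Lemma vsum_scale n c (f : Fin.t n -> R) : vsum n (fun i => c * f i) = c * vsum n f.
Proof. induction n; simpl; [lra|]. rewrite (IHn (fun i => f (Fin.FS i))); lra. Qed.

Lemma vsum_sub n (f g : Fin.t n -> R) : vsum n (fun i => f i - g i) = vsum n f - vsum n g.
Proof.
  replace (vsum n f - vsum n g) with (vsum n f + (-1) * vsum n g) by ring.
  rewrite <- vsum_scale, <- vsum_add. apply vsum_ext; intros; ring.
Qed.

Lemma vsum_le n (f g : Fin.t n -> R) : (forall i, f i <= g i) -> vsum n f <= vsum n g.
Proof.
  induction n; simpl; intros H; [lra|].
  pose proof (IHn (fun i => f (Fin.FS i)) (fun i => g (Fin.FS i)) (fun i => H (Fin.FS i))).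
  pose proof (H Fin.F1). lra.
Qed.

Lemma vsum_const n c : vsum n (fun _ => c) = INR n * c.
Proof. induction n; simpl vsum; [simpl; lra|]. rewrite IHn, S_INR; lra. Qed.

Lemma vsum_nonneg n (f : Fin.t n -> R) : (forall i, 0 <= f i) -> 0 <= vsum n f.
Proof. intros H. rewrite <- (Rmult_0_r (INR n)), <- vsum_const. apply vsum_le; auto. Qed.

Lemma vsum_abs n (f : Fin.t n -> R) : Rabs (vsum n f) <= vsum n (fun i => Rabs (f i)).
Proof.
  induction n; simpl; [rewrite Rabs_R0; lra|].
  pose proof (IHn (fun i => f (Fin.FS i))).
  pose proof (Rabs_triang (f Fin.F1) (vsum n (fun i => f (Fin.FS i)))). lra.
Qed.

Lemma vsum_term n (f : Fin.t n -> R) i : (forall j, 0 <= f j) -> f i <= vsum n f.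
Proof.
  induction n; intros H; [inversion i|].
  revert f H; pattern i; apply Fin.caseS'; simpl.
  - intros f H. pose proof (vsum_nonneg n (fun i => f (Fin.FS i)) (fun j => H (Fin.FS j))). lra.
  - intros p f H. pose proof (IHn (fun i => f (Fin.FS i)) p (fun j => H (Fin.FS j))).
    pose proof (H Fin.F1). lra.
Qed.

Lemma inner_comm n (u v : vec n) : inner u v = inner v u.
Proof. unfold inner; apply vsum_ext; intros; ring. Qed.
Lemma inner_addl n (u v w : vec n) : inner (vadd u v) w = inner u w + inner v w.
Proof. unfold inner, vadd. rewrite <- vsum_add. apply vsum_ext; intros; ring. Qed.
Lemma inner_addr n (u v w : vec n) : inner w (vadd u v) = inner w u + inner w v.
Proof. unfold inner, vadd. rewrite <- vsum_add. apply vsum_ext; intros; ring. Qed.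
Lemma inner_subl n (u v w : vec n) : inner (vsub u v) w = inner u w - inner v w.
Proof. unfold inner, vsub. rewrite <- vsum_sub. apply vsum_ext; intros; ring. Qed.
Lemma inner_subr n (u v w : vec n) : inner w (vsub u v) = inner w u - inner w v.
Proof. rewrite inner_comm, inner_subl, (inner_comm _ u), (inner_comm _ v); auto. Qed.
Lemma inner_scalel n c (u w : vec n) : inner (vscale c u) w = c * inner u w.
Proof. unfold inner, vscale. rewrite <- vsum_scale. apply vsum_ext; intros; ring. Qed.
Lemma inner_scaler n c (u w : vec n) : inner w (vscale c u) = c * inner w u.
Proof. unfold inner, vscale. rewrite <- vsum_scale. apply vsum_ext; intros; ring. Qed.
Lemma inner_zerol n (w : vec n) : inner vzero w = 0.
Proof.
  unfold inner, vzero. rewrite (vsum_ext n _ (fun _ => 0)) by (intros; ring).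
  rewrite vsum_const; ring.
Qed.
Lemma inner_pos n (u : vec n) : 0 <= inner u u.
Proof. apply vsum_nonneg; intros; nra. Qed.

Lemma le_of_sq a b : 0 <= b -> a * a <= b * b -> a <= b.
Proof. intros. destruct (Rle_dec a b); auto. nra. Qed.

Lemma discriminant_bound aa ab bb : 0 <= bb ->
  (forall t, 0 <= aa - 2 * t * ab + t * t * bb) -> ab * ab <= aa * bb.
Proof.
  intros Hbb H. destruct (Req_dec bb 0) as [Hb|Hb].
  - subst bb. destruct (Req_dec ab 0) as [->|Hab]; [lra|].
    pose proof (H ((aa + 1) / (2 * ab))).
    assert (2 * ((aa + 1) / (2 * ab)) * ab = aa + 1) by (field; auto). lra.
  - pose proof (H (ab / bb)) as Ht.
    replace (aa - 2 * (ab / bb) * ab + ab / bb * (ab / bb) * bb)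
      with ((aa * bb - ab * ab) / bb) in Ht by (field; lra).
    assert (Hq : 0 <= (aa * bb - ab * ab) * / bb) by exact Ht.
    assert (0 < / bb) by (apply Rinv_0_lt_compat; lra).
    destruct (Rle_dec (ab * ab) (aa * bb)); auto. nra.
Qed.

Lemma vnorm_sq n (u : vec n) : vnorm u * vnorm u = inner u u.
Proof. unfold vnorm. apply sqrt_sqrt, inner_pos. Qed.
Lemma vnorm_pos n (u : vec n) : 0 <= vnorm u.
Proof. apply sqrt_pos. Qed.
Lemma vnorm_pow2 n (u : vec n) : vnorm u ^ 2 = inner u u.
Proof. rewrite <- vnorm_sq; ring. Qed.

Lemma cauchy_schwarz n (u v : vec n) : Rabs (inner u v) <= vnorm u * vnorm v.
Proof.
  assert (Hd : inner u v * inner u v <= inner u u * inner v v).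
  { apply discriminant_bound; [apply inner_pos|]. intros t.
    pose proof (inner_pos n (vsub u (vscale t v))) as H.
    rewrite inner_subl, !inner_subr, !inner_scalel, !inner_scaler, (inner_comm _ v u) in H. lra. }
  apply le_of_sq.
  - apply Rmult_le_pos; apply vnorm_pos.
  - replace (vnorm u * vnorm v * (vnorm u * vnorm v)) with ((vnorm u * vnorm u) * (vnorm v * vnorm v)) by ring.
    rewrite !vnorm_sq, <- Rabs_mult, Rabs_pos_eq by nra. exact Hd.
Qed.
Lemma cauchy_schwarz_upper n (u v : vec n) : inner u v <= vnorm u * vnorm v.
Proof. pose proof (cauchy_schwarz n u v). pose proof (Rle_abs (inner u v)). lra. Qed.

Lemma vnorm_add n (u v : vec n) : vnorm (vadd u v) <= vnorm u + vnorm v.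
Proof.
  pose proof (vnorm_pos n u); pose proof (vnorm_pos n v).
  apply le_of_sq; [lra|].
  rewrite vnorm_sq, inner_addl, !inner_addr, (inner_comm _ v u).
  pose proof (cauchy_schwarz_upper n u v). pose proof (vnorm_sq n u). pose proof (vnorm_sq n v). nra.
Qed.
Lemma vnorm_scale n c (u : vec n) : vnorm (vscale c u) = Rabs c * vnorm u.
Proof.
  unfold vnorm. rewrite inner_scalel, inner_scaler, <- Rmult_assoc, sqrt_mult.
  - f_equal. rewrite <- sqrt_Rsqr_abs. reflexivity.
  - nra.
  - apply inner_pos.
Qed.
Lemma vnorm_coord n (u : vec n) i : Rabs (u i) <= vnorm u.
Proof.
  apply le_of_sq; [apply vnorm_pos|]. rewrite vnorm_sq, <- Rabs_mult, Rabs_pos_eq by nra.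
  apply (vsum_term n (fun i => u i * u i)). intros; nra.
Qed.
Lemma vnorm_le_sum n (u : vec n) : vnorm u <= vsum n (fun i => Rabs (u i)).
Proof.
  apply le_of_sq; [apply vsum_nonneg; intros; apply Rabs_pos|]. rewrite vnorm_sq. unfold inner.
  induction n; simpl; [lra|]. specialize (IHn (fun i => u (Fin.FS i))). simpl in IHn.
  pose proof (vsum_nonneg n (fun i => Rabs (u (Fin.FS i))) (fun i => Rabs_pos _)).
  pose proof (Rabs_pos (u Fin.F1)).
  assert (u Fin.F1 * u Fin.F1 = Rabs (u Fin.F1) * Rabs (u Fin.F1)) by (rewrite <- Rabs_mult, Rabs_pos_eq; nra).
  nra.
Qed.

Ltac vext := let i := fresh "i" in
  apply functional_extensionality; intro i; unfold vadd, vsub, vscale, vzero; simpl.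
Ltac Xext := unfold Xadd, Xsub, Xscale, Xzero; apply injective_projections; simpl; vext; try ring.

Lemma vnorm_vzero n : vnorm (@vzero n) = 0.
Proof. unfold vnorm. rewrite inner_zerol. apply sqrt_0. Qed.
Lemma vnorm_zero_vec n (v : vec n) : vnorm v = 0 -> v = vzero.
Proof.
  intros H. vext. pose proof (vnorm_coord n v i) as Hi. rewrite H in Hi.
  destruct (Req_dec (v i) 0) as [|Hne]; auto.
  pose proof (Rabs_pos_lt (v i) Hne). lra.
Qed.

(* For s = 1 this is the Euclidean inner product of X; for s = -1 it is the
   indefinite form behind L, since L(x1,x2) = B_{-1}(x2-x1, x2-x1). *)
Definition bform {n m} (s : R) (x y : X n m) : R :=
  inner (fst x) (fst y) + s * inner (snd x) (snd y).

Lemma bform_sym n m s (x y : X n m) : bform s x y = bform s y x.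
Proof. unfold bform; rewrite (inner_comm _ (fst x)), (inner_comm _ (snd x)); auto. Qed.
Lemma bform_addl n m s (x y z : X n m) : bform s (Xadd x y) z = bform s x z + bform s y z.
Proof. unfold bform, Xadd; simpl. rewrite !inner_addl; ring. Qed.
Lemma bform_subl n m s (x y z : X n m) : bform s (Xsub x y) z = bform s x z - bform s y z.
Proof. unfold bform, Xsub; simpl. rewrite !inner_subl; ring. Qed.
Lemma bform_scalel n m s c (x z : X n m) : bform s (Xscale c x) z = c * bform s x z.
Proof. unfold bform, Xscale; simpl. rewrite !inner_scalel; ring. Qed.
Lemma bform_addr n m s (x y z : X n m) : bform s z (Xadd x y) = bform s z x + bform s z y.
Proof. rewrite !(bform_sym _ _ _ z). apply bform_addl. Qed.
Lemma bform_subr n m s (x y z : X n m) : bform s z (Xsub x y) = bform s z x - bform s z y.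
Proof. rewrite !(bform_sym _ _ _ z). apply bform_subl. Qed.
Lemma bform_scaler n m s c (x z : X n m) : bform s z (Xscale c x) = c * bform s z x.
Proof. rewrite !(bform_sym _ _ _ z). apply bform_scalel. Qed.

Lemma bform_sub_swap n m s (x y : X n m) : bform s (Xsub x y) (Xsub x y) = bform s (Xsub y x) (Xsub y x).
Proof. replace (Xsub x y) with (Xscale (-1) (Xsub y x)) by Xext. rewrite bform_scalel, bform_scaler. ring. Qed.

Lemma Lf_bform n m (x1 x2 : X n m) : Lf x1 x2 = bform (-1) (Xsub x2 x1) (Xsub x2 x1).
Proof. unfold Lf. rewrite !vnorm_pow2. unfold bform, Xsub; simpl. ring. Qed.
Lemma bform_lorentz n m (D : X n m) :
  bform (-1) D D = vnorm (fst D) * vnorm (fst D) - vnorm (snd D) * vnorm (snd D).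
Proof. unfold bform. rewrite !vnorm_sq. ring. Qed.

Lemma Xnorm_sq n m (x : X n m) : Xnorm x * Xnorm x = bform 1 x x.
Proof.
  unfold Xnorm, bform. rewrite Rmult_1_l. apply sqrt_sqrt.
  pose proof (inner_pos _ (fst x)); pose proof (inner_pos _ (snd x)); lra.
Qed.
Lemma Xnorm_pos n m (x : X n m) : 0 <= Xnorm x.
Proof. apply sqrt_pos. Qed.
Lemma bform_euclid_pos n m (x : X n m) : 0 <= bform 1 x x.
Proof. rewrite <- Xnorm_sq. apply Rle_0_sqr. Qed.
Lemma Xnorm_fst n m (x : X n m) : vnorm (fst x) <= Xnorm x.
Proof.
  apply le_of_sq; [apply Xnorm_pos|]. rewrite Xnorm_sq, vnorm_sq. unfold bform.
  pose proof (inner_pos _ (snd x)); lra.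
Qed.
Lemma Xnorm_snd n m (x : X n m) : vnorm (snd x) <= Xnorm x.
Proof.
  apply le_of_sq; [apply Xnorm_pos|]. rewrite Xnorm_sq, vnorm_sq. unfold bform.
  pose proof (inner_pos _ (fst x)); lra.
Qed.
Lemma Xnorm_le n m (x : X n m) : Xnorm x <= vnorm (fst x) + vnorm (snd x).
Proof.
  pose proof (vnorm_pos _ (fst x)); pose proof (vnorm_pos _ (snd x)).
  apply le_of_sq; [lra|]. rewrite Xnorm_sq. unfold bform. rewrite <- !vnorm_sq. nra.
Qed.

Lemma bform_cauchy_schwarz n m s (x y : X n m) : -1 <= s <= 1 ->
  Rabs (bform s x y) <= Xnorm x * Xnorm y.
Proof.
  intros Hs. unfold bform.
  pose proof (cauchy_schwarz _ (fst x) (fst y)). pose proof (cauchy_schwarz _ (snd x) (snd y)).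
  apply Rle_trans with (vnorm (fst x) * vnorm (fst y) + vnorm (snd x) * vnorm (snd y)).
  - eapply Rle_trans; [apply Rabs_triang|]. rewrite Rabs_mult.
    assert (Rabs s <= 1) by (apply Rabs_le; lra).
    pose proof (Rabs_pos (inner (snd x) (snd y))). nra.
  - apply le_of_sq; [apply Rmult_le_pos; apply Xnorm_pos|].
    replace (Xnorm x * Xnorm y * (Xnorm x * Xnorm y)) with ((Xnorm x * Xnorm x) * (Xnorm y * Xnorm y)) by ring.
    rewrite !Xnorm_sq. unfold bform. rewrite <- !vnorm_sq.
    pose proof (Rle_0_sqr (vnorm (fst x) * vnorm (snd y) - vnorm (snd x) * vnorm (fst y))).
    unfold Rsqr in *. nra.
Qed.
Lemma bform_cs_upper n m s (x y : X n m) : -1 <= s <= 1 -> bform s x y <= Xnorm x * Xnorm y.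
Proof. intros. pose proof (bform_cauchy_schwarz n m s x y H). pose proof (Rle_abs (bform s x y)). lra. Qed.
Lemma bform_cs_lower n m s (x y : X n m) : -1 <= s <= 1 -> - (Xnorm x * Xnorm y) <= bform s x y.
Proof.
  intros. pose proof (bform_cauchy_schwarz n m s x y H).
  pose proof (Rle_abs (- bform s x y)). rewrite Rabs_Ropp in H1. lra.
Qed.

Lemma Xnorm_add n m (x y : X n m) : Xnorm (Xadd x y) <= Xnorm x + Xnorm y.
Proof.
  pose proof (Xnorm_pos _ _ x); pose proof (Xnorm_pos _ _ y).
  apply le_of_sq; [lra|]. rewrite Xnorm_sq, bform_addl, !bform_addr, (bform_sym _ _ _ y x).
  pose proof (bform_cs_upper n m 1 x y ltac:(lra)). pose proof (Xnorm_sq n m x). pose proof (Xnorm_sq n m y). nra.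
Qed.
Lemma Xnorm_scale n m c (x : X n m) : Xnorm (Xscale c x) = Rabs c * Xnorm x.
Proof.
  pose proof (Rabs_pos c); pose proof (Xnorm_pos _ _ x).
  apply Rsqr_inj; [apply Xnorm_pos|nra|]. unfold Rsqr.
  rewrite Xnorm_sq, bform_scalel, bform_scaler.
  replace (Rabs c * Xnorm x * (Rabs c * Xnorm x)) with ((Rabs c * Rabs c) * (Xnorm x * Xnorm x)) by ring.
  rewrite <- Rabs_mult, Rabs_pos_eq by nra. rewrite Xnorm_sq; ring.
Qed.
Lemma Xnorm_sub_sym n m (x y : X n m) : Xnorm (Xsub x y) = Xnorm (Xsub y x).
Proof.
  replace (Xsub x y) with (Xscale (-1) (Xsub y x)) by Xext.
  rewrite Xnorm_scale, (Rabs_left (-1)) by lra; ring.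
Qed.
Lemma Xnorm_tri n m (x y z : X n m) : Xnorm (Xsub x z) <= Xnorm (Xsub x y) + Xnorm (Xsub y z).
Proof. replace (Xsub x z) with (Xadd (Xsub x y) (Xsub y z)) by Xext. apply Xnorm_add. Qed.
Lemma Xnorm_Xzero n m : Xnorm (@Xzero n m) = 0.
Proof. unfold Xnorm, Xzero; simpl. rewrite !inner_zerol, Rplus_0_r. apply sqrt_0. Qed.
Lemma Xnorm_zero_eq n m (x y : X n m) : Xnorm (Xsub x y) = 0 -> x = y.
Proof.
  intros H. pose proof (Xnorm_fst _ _ (Xsub x y)). pose proof (Xnorm_snd _ _ (Xsub x y)).
  pose proof (vnorm_pos _ (fst (Xsub x y))). pose proof (vnorm_pos _ (snd (Xsub x y))).
  assert (Ha : vsub (fst x) (fst y) = vzero) by (apply vnorm_zero_vec; simpl in *; lra).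
  assert (Hz : vsub (snd x) (snd y) = vzero) by (apply vnorm_zero_vec; simpl in *; lra).
  apply injective_projections; apply functional_extensionality; intros i;
    [apply (f_equal (fun v => v i)) in Ha | apply (f_equal (fun v => v i)) in Hz];
    unfold vsub, vzero in *; lra.
Qed.

(* Matrices, measured by the sum of the absolute values of their entries: a
   crude but explicit bound for the action on vectors, and a quantity that
   depends continuously on the entries. *)
Definition mnorm1 {k n} (M : mat k n) : R := vsum k (fun i => vsum n (fun j => Rabs (M i j))).
Definition msub {k n} (M N : mat k n) : mat k n := fun i j => M i j - N i j.

Lemma mnorm1_pos k n (M : mat k n) : 0 <= mnorm1 M.
Proof. apply vsum_nonneg; intros; apply vsum_nonneg; intros; apply Rabs_pos. Qed.
Lemma mapply_bound k n (M : mat k n) v : vnorm (mapply M v) <= mnorm1 M * vnorm v.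
Proof.
  eapply Rle_trans; [apply vnorm_le_sum|]. unfold mnorm1. rewrite Rmult_comm, <- vsum_scale.
  apply vsum_le; intros i. unfold mapply. eapply Rle_trans; [apply vsum_abs|].
  rewrite <- vsum_scale. apply vsum_le; intros j.
  rewrite Rabs_mult. pose proof (vnorm_coord _ v j). pose proof (Rabs_pos (M i j)). nra.
Qed.
Lemma mapply_sub k n (M : mat k n) u v : mapply M (vsub u v) = vsub (mapply M u) (mapply M v).
Proof. vext. unfold mapply. rewrite <- vsum_sub. apply vsum_ext; intros; unfold vsub; ring. Qed.
Lemma mapply_scale k n (M : mat k n) c u : mapply M (vscale c u) = vscale c (mapply M u).
Proof. vext. unfold mapply. rewrite <- vsum_scale. apply vsum_ext; intros; unfold vscale; ring. Qed.
Lemma mapply_msub k n (M N : mat k n) u : mapply (msub M N) u = vsub (mapply M u) (mapply N u).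
Proof. vext. unfold mapply. rewrite <- vsum_sub. apply vsum_ext; intros; unfold msub; ring. Qed.
Lemma mapply_zero k n (M : mat k n) : mapply M vzero = vzero.
Proof.
  vext. unfold mapply. rewrite (vsum_ext n _ (fun _ => 0)) by (intros; unfold vzero; ring).
  rewrite vsum_const; ring.
Qed.
Lemma mnorm1_tri k n (A B C : mat k n) : mnorm1 (msub A C) <= mnorm1 (msub A B) + mnorm1 (msub B C).
Proof.
  unfold mnorm1. rewrite <- vsum_add. apply vsum_le; intros i. rewrite <- vsum_add. apply vsum_le; intros j.
  unfold msub. replace (A i j - C i j) with ((A i j - B i j) + (B i j - C i j)) by ring. apply Rabs_triang.
Qed.
Lemma mnorm1_le k n (A B : mat k n) : mnorm1 A <= mnorm1 B + mnorm1 (msub A B).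
Proof.
  unfold mnorm1. rewrite <- vsum_add. apply vsum_le; intros i. rewrite <- vsum_add. apply vsum_le; intros j.
  unfold msub. replace (A i j) with (B i j + (A i j - B i j)) at 1 by ring. apply Rabs_triang.
Qed.
Lemma mnorm1_msub_sym k n (A B : mat k n) : mnorm1 (msub A B) = mnorm1 (msub B A).
Proof.
  unfold mnorm1, msub. apply vsum_ext; intros; apply vsum_ext; intros.
  rewrite <- Rabs_Ropp. f_equal; ring.
Qed.

Definition blk {n m} (A : mat n n) (B : mat n m) (C : mat m n) (D : mat m m) (v : X n m) : X n m :=
  (vadd (mapply A (fst v)) (mapply B (snd v)), vadd (mapply C (fst v)) (mapply D (snd v))).

Lemma blk_bound n m A B C D (v : X n m) :
  Xnorm (blk A B C D v) <= (mnorm1 A + mnorm1 B + mnorm1 C + mnorm1 D) * Xnorm v.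
Proof.
  eapply Rle_trans; [apply Xnorm_le|]. unfold blk; simpl.
  pose proof (vnorm_add _ (mapply A (fst v)) (mapply B (snd v))).
  pose proof (vnorm_add _ (mapply C (fst v)) (mapply D (snd v))).
  pose proof (mapply_bound _ _ A (fst v)). pose proof (mapply_bound _ _ B (snd v)).
  pose proof (mapply_bound _ _ C (fst v)). pose proof (mapply_bound _ _ D (snd v)).
  pose proof (Xnorm_fst _ _ v). pose proof (Xnorm_snd _ _ v).
  pose proof (mnorm1_pos _ _ A). pose proof (mnorm1_pos _ _ B).
  pose proof (mnorm1_pos _ _ C). pose proof (mnorm1_pos _ _ D).
  nra.
Qed.
Lemma blk_msub n m A B C D A' B' C' D' (v : X n m) :
  Xsub (blk A B C D v) (blk A' B' C' D' v) = blk (msub A A') (msub B B') (msub C C') (msub D D') v.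
Proof. unfold blk, Xsub; simpl. rewrite !mapply_msub. f_equal; vext; ring. Qed.
Lemma blk_sub n m A B C D (u v : X n m) : blk A B C D (Xsub u v) = Xsub (blk A B C D u) (blk A B C D v).
Proof. unfold blk, Xsub; simpl. rewrite !mapply_sub. f_equal; vext; ring. Qed.
Lemma blk_scale n m A B C D (u : X n m) c : blk A B C D (Xscale c u) = Xscale c (blk A B C D u).
Proof. unfold blk, Xscale; simpl. rewrite !mapply_scale. f_equal; vext; ring. Qed.

Lemma graph_defect_bound n m (M : mat n m) (u v : X n m) : fst v = mapply M (snd v) ->
  vnorm (vsub (fst u) (mapply M (snd u))) <= (mnorm1 M + 1) * Xnorm (Xsub u v).
Proof.
  intros Hv.
  replace (vsub (fst u) (mapply M (snd u))) with (vadd (vsub (fst u) (fst v)) (mapply M (vsub (snd v) (snd u))))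
    by (rewrite mapply_sub, Hv; vext; ring).
  eapply Rle_trans; [apply vnorm_add|].
  pose proof (mapply_bound _ _ M (vsub (snd v) (snd u))). pose proof (mnorm1_pos _ _ M).
  pose proof (Xnorm_fst _ _ (Xsub u v)) as Hfst.
  pose proof (Xnorm_snd _ _ (Xsub v u)) as Hsnd. rewrite Xnorm_sub_sym in Hsnd.
  simpl in Hfst, Hsnd. pose proof (vnorm_pos _ (vsub (snd v) (snd u))). nra.
Qed.

Lemma opnorm_spec k n (M : mat k n) :
  is_lub (fun y => exists v : vec n, vnorm v <= 1 /\ y = vnorm (mapply M v)) (opnorm M).
Proof.
  unfold opnorm. apply epsilon_spec.
  destruct (completeness (fun y => exists v : vec n, vnorm v <= 1 /\ y = vnorm (mapply M v))) as [r Hr].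
  - exists (mnorm1 M). intros y [v [Hv ->]].
    pose proof (mapply_bound _ _ M v). pose proof (mnorm1_pos _ _ M). pose proof (vnorm_pos _ v). nra.
  - exists (vnorm (mapply M vzero)), vzero. split; auto. rewrite vnorm_vzero; lra.
  - exists r; auto.
Qed.
Lemma opnorm_pos k n (M : mat k n) : 0 <= opnorm M.
Proof.
  destruct (opnorm_spec k n M) as [H _]. apply H. exists vzero.
  rewrite mapply_zero, !vnorm_vzero. split; lra.
Qed.
Lemma opnorm_bound k n (M : mat k n) v : vnorm (mapply M v) <= opnorm M * vnorm v.
Proof.
  destruct (Req_dec (vnorm v) 0) as [H0|H0].
  { apply vnorm_zero_vec in H0. subst. rewrite mapply_zero, !vnorm_vzero; lra. }
  pose proof (vnorm_pos _ v). destruct (opnorm_spec k n M) as [Hub _].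
  assert (Hinv : 0 < / vnorm v) by (apply Rinv_0_lt_compat; lra).
  assert (H2 : vnorm (mapply M (vscale (/ vnorm v) v)) <= opnorm M).
  { apply Hub. eexists; split; [|reflexivity].
    rewrite vnorm_scale, Rabs_pos_eq, Rinv_l; lra. }
  rewrite mapply_scale, vnorm_scale, Rabs_pos_eq in H2 by lra.
  apply Rmult_le_compat_r with (r := vnorm v) in H2; [|lra].
  rewrite Rmult_comm, <- Rmult_assoc, Rinv_r in H2; lra.
Qed.
Lemma inner_opnorm k n (M : mat k n) (a : vec k) z :
  - (opnorm M * vnorm a * vnorm z) <= inner a (mapply M z) <= opnorm M * vnorm a * vnorm z.
Proof.
  pose proof (cauchy_schwarz _ a (mapply M z)) as Hcs. pose proof (opnorm_bound _ _ M z).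
  pose proof (vnorm_pos _ a). pose proof (Rle_abs (inner a (mapply M z))).
  pose proof (Rle_abs (- inner a (mapply M z))). rewrite Rabs_Ropp in *. nra.
Qed.

Lemma lorentz_positive_open n m (Y : X n m) : bform (-1) Y Y > 0 ->
  exists rho, rho > 0 /\ forall u, Xnorm (Xsub u Y) < rho -> bform (-1) u u > 0.
Proof.
  intros HY. pose proof (Xnorm_pos _ _ Y).
  set (rho := Rmin 1 (bform (-1) Y Y / (2 * (2 * Xnorm Y + 1)))).
  exists rho. split; [apply Rmin_pos; [lra|apply Rdiv_lt_0_compat; lra]|].
  intros u Hu. pose proof (Rmin_l 1 (bform (-1) Y Y / (2 * (2 * Xnorm Y + 1)))) as Hr1.
  pose proof (Rmin_r 1 (bform (-1) Y Y / (2 * (2 * Xnorm Y + 1)))) as Hr2. fold rho in Hr1, Hr2.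
  set (e := Xsub u Y) in *. pose proof (Xnorm_pos _ _ e).
  assert (Hexp : bform (-1) u u = bform (-1) Y Y + bform (-1) e e + 2 * bform (-1) Y e).
  { unfold e. rewrite !bform_subl, !bform_subr, (bform_sym _ _ _ Y u). ring. }
  pose proof (bform_cs_lower _ _ (-1) e e ltac:(lra)). pose proof (bform_cs_lower _ _ (-1) Y e ltac:(lra)).
  assert (Xnorm e * (2 * Xnorm Y + 1) <= bform (-1) Y Y / 2).
  { apply Rle_trans with (bform (-1) Y Y / (2 * (2 * Xnorm Y + 1)) * (2 * Xnorm Y + 1)).
    - apply Rmult_le_compat_r; lra.
    - right; field; lra. }
  assert (Xnorm e * Xnorm e <= Xnorm e) by nra. nra.
Qed.

Lemma Xnorm_rescaled n m c (D v : X n m) : c > 0 ->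
  Xnorm (Xsub (Xscale (/ c) D) v) * c = Xnorm (Xsub D (Xscale c v)).
Proof.
  intros Hc. replace (Xsub D (Xscale c v)) with (Xscale c (Xsub (Xscale (/ c) D) v)).
  - rewrite Xnorm_scale, Rabs_pos_eq by lra. ring.
  - unfold Xscale, Xsub; apply injective_projections; simpl; apply functional_extensionality; intros i;
      unfold vsub, vscale; field; lra.
Qed.

(* One-sided (right, at t = 0) derivative and continuity of scalar functions on
   [0,oo), matching the notion of solution used in Defs. *)
Definition rderiv (psi : R -> R) (t l : R) : Prop :=
  forall eps, eps > 0 -> exists del, del > 0 /\ forall s, s >= 0 -> Rabs (s - t) < del ->
    Rabs (psi s - psi t - (s - t) * l) <= eps * Rabs (s - t).
Definition rcont (psi : R -> R) (t : R) : Prop :=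
  forall eps, eps > 0 -> exists del, del > 0 /\ forall s, s >= 0 -> Rabs (s - t) < del ->
    Rabs (psi s - psi t) < eps.

Lemma linear_increment_small K eps : 0 <= K -> eps > 0 ->
  exists del, del > 0 /\ forall h, Rabs h < del -> Rabs h * (K + 1) < eps.
Proof.
  intros HK Heps. exists (eps / (K + 2)). split; [apply Rdiv_lt_0_compat; lra|].
  intros h Hh. pose proof (Rabs_pos h).
  apply Rle_lt_trans with (Rabs h * (K + 2)); [nra|].
  apply Rlt_le_trans with (eps / (K + 2) * (K + 2)); [apply Rmult_lt_compat_r; lra|].
  right; field; lra.
Qed.

Lemma rderiv_derivable psi t l : t > 0 -> rderiv psi t l -> derivable_pt_lim psi t l.
Proof.
  intros Ht H eps Heps. destruct (H (eps / 2) ltac:(lra)) as [del [Hd H1]].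
  exists (mkposreal (Rmin del t) ltac:(apply Rmin_pos; lra)). simpl. intros h Hh0 Hh.
  pose proof (Rmin_l del t). pose proof (Rmin_r del t).
  specialize (H1 (t + h)). replace (t + h - t) with h in H1 by ring.
  assert (Rabs h > 0) by (apply Rabs_pos_lt; auto).
  assert (Hth : t + h >= 0) by (pose proof (Rle_abs (- h)); rewrite Rabs_Ropp in *; lra).
  specialize (H1 Hth ltac:(lra)).
  replace ((psi (t + h) - psi t) / h - l) with ((psi (t + h) - psi t - h * l) / h) by (field; auto).
  unfold Rdiv. rewrite Rabs_mult, Rabs_inv. apply Rmult_lt_reg_r with (Rabs h); auto.
  rewrite Rmult_assoc, Rinv_l by lra. nra.
Qed.

Lemma rderiv_cont psi t l : rderiv psi t l -> rcont psi t.
Proof.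
  intros H eps Heps. destruct (H 1 ltac:(lra)) as [del [Hd H1]].
  destruct (linear_increment_small (Rabs l) eps (Rabs_pos l) Heps) as [d2 [Hd2 H2]].
  exists (Rmin del d2). split; [apply Rmin_pos; auto|]. intros s Hs Hst.
  pose proof (Rmin_l del d2). pose proof (Rmin_r del d2).
  specialize (H1 s Hs ltac:(lra)). specialize (H2 (s - t) ltac:(lra)).
  apply Rle_lt_trans with (Rabs (s - t) * (Rabs l + 1)); [|exact H2].
  replace (psi s - psi t) with ((psi s - psi t - (s - t) * l) + (s - t) * l) by ring.
  eapply Rle_trans; [apply Rabs_triang|]. rewrite Rabs_mult. lra.
Qed.

Lemma curve_cont n m (g : R -> X n m) t v : curve_deriv g t v ->
  forall eps, eps > 0 -> exists del, del > 0 /\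
    forall s, s >= 0 -> Rabs (s - t) < del -> Xnorm (Xsub (g s) (g t)) < eps.
Proof.
  intros H eps Heps. destruct (H 1 ltac:(lra)) as [del [Hd H1]].
  destruct (linear_increment_small (Xnorm v) eps (Xnorm_pos _ _ v) Heps) as [d2 [Hd2 H2]].
  exists (Rmin del d2). split; [apply Rmin_pos; auto|]. intros s Hs Hst.
  pose proof (Rmin_l del d2). pose proof (Rmin_r del d2).
  specialize (H1 s Hs ltac:(lra)). specialize (H2 (s - t) ltac:(lra)).
  apply Rle_lt_trans with (Rabs (s - t) * (Xnorm v + 1)); [|exact H2].
  replace (Xsub (g s) (g t)) with (Xadd (Xsub (Xsub (g s) (g t)) (Xscale (s - t) v)) (Xscale (s - t) v)) by Xext.
  eapply Rle_trans; [apply Xnorm_add|]. rewrite Xnorm_scale. lra.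
Qed.

Lemma bform_expansion n m s (x y v : X n m) c :
  bform s y y - bform s x x - c * (2 * bform s x v)
  = bform s (Xsub y x) (Xsub y x) + 2 * bform s x (Xsub (Xsub y x) (Xscale c v)).
Proof. rewrite !bform_subl, !bform_subr, bform_scaler, (bform_sym _ _ _ y x). ring. Qed.

Lemma bform_rderiv n m s (g : R -> X n m) t v : -1 <= s <= 1 -> curve_deriv g t v ->
  rderiv (fun r => bform s (g r) (g r)) t (2 * bform s (g t) v).
Proof.
  intros Hs H eps Heps. set (x := g t).
  pose proof (Xnorm_pos _ _ x) as Px. pose proof (Xnorm_pos _ _ v) as Pv.
  set (e1 := Rmin 1 (eps / (4 * (Xnorm x + 1)))).
  assert (He1 : 0 < e1) by (apply Rmin_pos; [lra|apply Rdiv_lt_0_compat; lra]).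
  destruct (H e1 He1) as [del [Hd H1]].
  set (d2 := Rmin del (eps / (2 * (Xnorm v + 1) * (Xnorm v + 1)))).
  assert (Hd2 : 0 < d2) by (apply Rmin_pos; [lra|apply Rdiv_lt_0_compat; nra]).
  exists d2. split; auto. intros r Hr Hrt.
  pose proof (Rmin_l del (eps / (2 * (Xnorm v + 1) * (Xnorm v + 1)))) as H2.
  pose proof (Rmin_r del (eps / (2 * (Xnorm v + 1) * (Xnorm v + 1)))) as H3.
  pose proof (Rmin_l 1 (eps / (4 * (Xnorm x + 1)))) as H4.
  pose proof (Rmin_r 1 (eps / (4 * (Xnorm x + 1)))) as H5.
  fold d2 e1 in H2, H3, H4, H5.
  specialize (H1 r Hr ltac:(lra)). fold x in H1.
  set (D := Xsub (g r) x) in *. set (E := Xsub D (Xscale (r - t) v)) in *.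
  rewrite bform_expansion. fold D E. set (h := Rabs (r - t)) in *. assert (0 <= h) by apply Rabs_pos.
  assert (HD : Xnorm D <= h * (e1 + Xnorm v)).
  { replace D with (Xadd E (Xscale (r - t) v)) by (unfold E, D; Xext).
    eapply Rle_trans; [apply Xnorm_add|]. rewrite Xnorm_scale. fold h. lra. }
  pose proof (bform_cauchy_schwarz n m s D D Hs). pose proof (bform_cauchy_schwarz n m s x E Hs).
  eapply Rle_trans; [apply Rabs_triang|]. rewrite Rabs_mult, (Rabs_pos_eq 2) by lra.
  assert (Xnorm D * Xnorm D <= h * (eps / 2)).
  { pose proof (Xnorm_pos _ _ D). assert (Xnorm D <= h * (1 + Xnorm v)) by nra.
    assert (h * ((1 + Xnorm v) * (1 + Xnorm v)) <= eps / 2).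
    { apply Rle_trans with (eps / (2 * (Xnorm v + 1) * (Xnorm v + 1)) * ((1 + Xnorm v) * (1 + Xnorm v))).
      - apply Rmult_le_compat_r; nra.
      - right; field; lra. }
    nra. }
  assert (Xnorm x * Xnorm E <= h * (eps / 4)).
  { assert (Xnorm x * e1 <= eps / 4).
    { apply Rle_trans with ((Xnorm x + 1) * (eps / (4 * (Xnorm x + 1)))).
      - apply Rmult_le_compat; lra.
      - right; field; lra. }
    pose proof (Xnorm_pos _ _ E). nra. }
  nra.
Qed.

Lemma curve_lin n m (g1 g2 : R -> X n m) t v1 v2 a b :
  curve_deriv g1 t v1 -> curve_deriv g2 t v2 ->
  curve_deriv (fun s => Xadd (Xscale a (g1 s)) (Xscale b (g2 s))) t (Xadd (Xscale a v1) (Xscale b v2)).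
Proof.
  intros H1 H2 eps Heps. set (e := eps / (Rabs a + Rabs b + 1)).
  pose proof (Rabs_pos a). pose proof (Rabs_pos b).
  assert (He : e > 0) by (apply Rdiv_lt_0_compat; lra).
  destruct (H1 e He) as [d1 [Hd1 K1]]. destruct (H2 e He) as [d2 [Hd2 K2]].
  exists (Rmin d1 d2). split; [apply Rmin_pos; auto|]. intros s Hs Hst.
  pose proof (Rmin_l d1 d2). pose proof (Rmin_r d1 d2).
  specialize (K1 s Hs ltac:(lra)). specialize (K2 s Hs ltac:(lra)).
  replace (Xsub (Xsub (Xadd (Xscale a (g1 s)) (Xscale b (g2 s))) (Xadd (Xscale a (g1 t)) (Xscale b (g2 t))))
            (Xscale (s - t) (Xadd (Xscale a v1) (Xscale b v2))))
    with (Xadd (Xscale a (Xsub (Xsub (g1 s) (g1 t)) (Xscale (s - t) v1)))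
               (Xscale b (Xsub (Xsub (g2 s) (g2 t)) (Xscale (s - t) v2)))) by Xext.
  eapply Rle_trans; [apply Xnorm_add|]. rewrite !Xnorm_scale. pose proof (Rabs_pos (s - t)).
  assert (e * (Rabs a + Rabs b + 1) = eps) by (unfold e; field; lra). nra.
Qed.

Lemma curve_sub_scaled n m (g1 g2 : R -> X n m) t v1 v2 c :
  curve_deriv g1 t v1 -> curve_deriv g2 t v2 ->
  curve_deriv (fun s => Xsub (g1 s) (Xscale c (g2 s))) t (Xsub v1 (Xscale c v2)).
Proof.
  intros H1 H2. pose proof (curve_lin n m g1 g2 t v1 v2 1 (- c) H1 H2) as H.
  replace (fun s => Xsub (g1 s) (Xscale c (g2 s))) with (fun s => Xadd (Xscale 1 (g1 s)) (Xscale (- c) (g2 s)))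
    by (apply functional_extensionality; intros; Xext).
  replace (Xsub v1 (Xscale c v2)) with (Xadd (Xscale 1 v1) (Xscale (- c) v2)) by Xext. exact H.
Qed.

Lemma curve_sub n m (g1 g2 : R -> X n m) t v1 v2 : curve_deriv g1 t v1 -> curve_deriv g2 t v2 ->
  curve_deriv (fun s => Xsub (g1 s) (g2 s)) t (Xsub v1 v2).
Proof.
  intros H1 H2. pose proof (curve_sub_scaled n m g1 g2 t v1 v2 1 H1 H2) as H.
  replace (fun s => Xsub (g1 s) (g2 s)) with (fun s => Xsub (g1 s) (Xscale 1 (g2 s)))
    by (apply functional_extensionality; intros; Xext).
  replace (Xsub v1 v2) with (Xsub v1 (Xscale 1 v2)) by Xext. exact H.
Qed.

Lemma exp_mono a b : a <= b -> exp a <= exp b.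
Proof. intros H. destruct (Req_dec a b) as [->|]; [lra|]. left; apply exp_increasing; lra. Qed.

Lemma nonincreasing_on (chi chi' : R -> R) T : 0 <= T ->
  (forall t, 0 < t <= T -> derivable_pt_lim chi t (chi' t)) ->
  (forall t, 0 < t <= T -> chi' t <= 0) -> rcont chi 0 -> chi T <= chi 0.
Proof.
  intros HT Hd Hn Hc. destruct (Req_dec T 0) as [->|HT0]; [lra|].
  apply Rnot_lt_le; intros Hlt. destruct (Hc (chi T - chi 0) ltac:(lra)) as [del [Hdel Hc']].
  set (a := Rmin (del / 2) (T / 2)). assert (0 < a) by (apply Rmin_pos; lra).
  pose proof (Rmin_l (del / 2) (T / 2)). pose proof (Rmin_r (del / 2) (T / 2)). fold a in H0, H1.
  destruct (MVT_cor2 chi chi' a T ltac:(lra)) as [c [Hc1 Hc2]].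
  { intros c Hc0. apply Hd. lra. }
  specialize (Hn c ltac:(lra)).
  specialize (Hc' a ltac:(lra) ltac:(rewrite Rminus_0_r, Rabs_pos_eq; lra)).
  pose proof (Rabs_def2 _ _ Hc'). assert (chi' c * (T - a) <= 0) by nra. lra.
Qed.

Lemma rcont_exp_weight (psi : R -> R) c K : K > 0 -> rcont psi 0 ->
  rcont (fun t => (psi t + c) * exp (- (K * t))) 0.
Proof.
  intros HK Hc eps Heps. set (a := Rabs (psi 0 + c)). assert (Ha : 0 <= a) by apply Rabs_pos.
  destruct (Hc (eps / 2) ltac:(lra)) as [d [Hd0 Hd1]].
  set (d2 := eps / (2 * K * (a + 1))). assert (Hd2 : d2 > 0) by (apply Rdiv_lt_0_compat; nra).
  exists (Rmin d d2). split; [apply Rmin_pos; auto|]. intros s Hs Hs0.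
  pose proof (Rmin_l d d2). pose proof (Rmin_r d d2).
  rewrite Rminus_0_r, Rabs_pos_eq in Hs0 by lra.
  specialize (Hd1 s Hs ltac:(rewrite Rminus_0_r, Rabs_pos_eq; lra)).
  simpl. rewrite Rmult_0_r, Ropp_0, exp_0, Rmult_1_r.
  pose proof (exp_mono (- (K * s)) 0 ltac:(nra)) as Hle1. rewrite exp_0 in Hle1.
  pose proof (exp_pos (- (K * s))). pose proof (exp_ineq1_le (- (K * s))).
  replace ((psi s + c) * exp (- (K * s)) - (psi 0 + c))
    with ((psi s - psi 0) * exp (- (K * s)) + (psi 0 + c) * (exp (- (K * s)) - 1)) by ring.
  eapply Rle_lt_trans; [apply Rabs_triang|]. rewrite !Rabs_mult. fold a.
  rewrite (Rabs_pos_eq (exp _)), (Rabs_left1 (exp (- (K * s)) - 1)) by lra.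
  assert (K * s * (a + 1) <= eps / 2).
  { apply Rle_trans with (K * d2 * (a + 1)).
    - apply Rmult_le_compat_r; [lra|]. apply Rmult_le_compat_l; lra.
    - right. unfold d2. field. lra. }
  pose proof (Rabs_pos (psi s - psi 0)). nra.
Qed.

Lemma derivable_neg_linear K t : derivable_pt_lim (fun t => - (K * t)) t (- K).
Proof.
  intros eps Heps. exists (mkposreal 1 Rlt_0_1). intros h Hh _.
  replace ((- (K * (t + h)) - - (K * t)) / h - - K) with 0 by (field; auto). rewrite Rabs_R0; lra.
Qed.

Lemma gronwall_le (psi psi' : R -> R) K b T : K > 0 -> 0 <= b -> 0 <= T ->
  (forall t, 0 <= t <= T -> rderiv psi t (psi' t)) ->
  (forall t, 0 < t <= T -> psi' t <= K * psi t + b) ->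
  psi T <= (psi 0 + b / K) * exp (K * T) - b / K.
Proof.
  intros HK Hb HT Hd Hle.
  set (chi := fun t => (psi t + b / K) * exp (- (K * t))).
  set (chi' := fun t => psi' t * exp (- (K * t)) + (psi t + b / K) * (exp (- (K * t)) * - K)).
  assert (Hchi : chi T <= chi 0).
  { apply (nonincreasing_on chi chi' T HT).
    - intros t Ht. unfold chi, chi'.
      assert (H1 : derivable_pt_lim (fun t => psi t + b / K) t (psi' t + 0)).
      { apply (derivable_pt_lim_plus psi (fct_cte (b / K))).
        - apply rderiv_derivable; [lra|apply Hd; lra].
        - apply derivable_pt_lim_const. }
      assert (H2 : derivable_pt_lim (fun t => exp (- (K * t))) t (exp (- (K * t)) * - K)).
      { apply (derivable_pt_lim_comp (fun t => - (K * t)) exp).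
        - apply derivable_neg_linear.
        - apply derivable_pt_lim_exp. }
      pose proof (derivable_pt_lim_mult _ _ t _ _ H1 H2) as H. rewrite Rplus_0_r in H. exact H.
    - intros t Ht. unfold chi'. specialize (Hle t Ht). pose proof (exp_pos (- (K * t))).
      replace (psi' t * exp (- (K * t)) + (psi t + b / K) * (exp (- (K * t)) * - K))
        with ((psi' t - K * psi t - b) * exp (- (K * t))) by (field; lra).
      nra.
    - apply rcont_exp_weight; auto. eapply rderiv_cont. apply Hd. lra. }
  unfold chi in Hchi. rewrite Rmult_0_r, Ropp_0, exp_0, Rmult_1_r in Hchi.
  apply Rmult_le_compat_r with (r := exp (K * T)) in Hchi; [|left; apply exp_pos].
  rewrite Rmult_assoc, <- exp_plus in Hchi. replace (- (K * T) + K * T) with 0 in Hchi by ring.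
  rewrite exp_0 in Hchi. lra.
Qed.

Lemma gronwall_homogeneous (psi psi' : R -> R) K T : K > 0 -> 0 <= T ->
  (forall t, 0 <= t <= T -> rderiv psi t (psi' t)) ->
  (forall t, 0 < t <= T -> psi' t <= K * psi t) -> psi T <= psi 0 * exp (K * T).
Proof.
  intros HK HT Hd Hle.
  pose proof (gronwall_le psi psi' K 0 T HK ltac:(lra) HT Hd ltac:(intros t Ht; rewrite Rplus_0_r; auto)).
  unfold Rdiv in H. rewrite Rmult_0_l, Rplus_0_r, Rminus_0_r in H. exact H.
Qed.

Lemma gronwall_growth (psi psi' : R -> R) K T : K > 0 -> 0 <= T ->
  (forall t, 0 <= t <= T -> rderiv psi t (psi' t)) ->
  (forall t, 0 < t <= T -> psi' t >= K * psi t) -> psi T >= psi 0 * exp (K * T).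
Proof.
  intros HK HT Hd Hge.
  assert (- psi T <= - psi 0 * exp (K * T)); [|lra].
  apply (gronwall_homogeneous (fun t => - psi t) (fun t => - psi' t) K T HK HT).
  - intros t Ht eps Heps. destruct (Hd t Ht eps Heps) as [del [Hdel H]].
    exists del. split; auto. intros s Hs Hst.
    replace (- psi s - - psi t - (s - t) * - psi' t) with (- (psi s - psi t - (s - t) * psi' t)) by ring.
    rewrite Rabs_Ropp. auto.
  - intros t Ht. specialize (Hge t Ht). lra.
Qed.

Lemma first_zero (phi : R -> R) t1 : (forall t, 0 <= t <= t1 -> rcont phi t) ->
  phi 0 > 0 -> 0 <= t1 -> phi t1 <= 0 ->
  exists ts, 0 < ts <= t1 /\ phi ts = 0 /\ forall s, 0 <= s < ts -> phi s > 0.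
Proof.
  intros Hc H0 Ht1 H1.
  (* ts is the infimum of the zero set, obtained as minus a supremum *)
  set (E := fun x => 0 <= - x <= t1 /\ phi (- x) <= 0).
  destruct (completeness E) as [mm [Hub Hlub]].
  { exists 0. intros x [Hx _]. lra. }
  { exists (- t1). unfold E. rewrite Ropp_involutive. split; [lra|auto]. }
  set (g := - mm).
  assert (Hlow : forall x, 0 <= x <= t1 -> phi x <= 0 -> g <= x).
  { intros x Hx Hpx. assert (E (- x)) by (unfold E; rewrite Ropp_involutive; auto).
    specialize (Hub _ H). unfold g; lra. }
  assert (Hg0 : 0 <= g).
  { assert (is_upper_bound E 0) by (intros x [Hx _]; lra). specialize (Hlub 0 H). unfold g; lra. }
  assert (Hgt1 : g <= t1) by (apply Hlow; auto; lra).
  assert (Happ : forall g', g' > g -> exists x, 0 <= x <= t1 /\ phi x <= 0 /\ x < g').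
  { intros g' Hg'. apply NNPP. intros Hne. assert (is_upper_bound E (- g')).
    { intros y [Hy Hpy]. apply Rnot_lt_le. intros Hlt. apply Hne. exists (- y). split; auto. split; auto. lra. }
    specialize (Hlub _ H). unfold g in Hg'. lra. }
  assert (Hpg : phi g <= 0).
  { apply Rnot_lt_le. intros Hpos. destruct (Hc g ltac:(lra) (phi g) Hpos) as [d [Hd Hd1]].
    destruct (Happ (g + d) ltac:(lra)) as [x [Hx [Hpx Hxg]]]. pose proof (Hlow x Hx Hpx).
    specialize (Hd1 x ltac:(lra) ltac:(rewrite Rabs_pos_eq; lra)). pose proof (Rabs_def2 _ _ Hd1). lra. }
  assert (Hgpos : 0 < g) by (destruct (Req_dec g 0) as [Hg|Hg]; [rewrite Hg in Hpg; lra|lra]).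
  assert (Hbefore : forall s, 0 <= s < g -> phi s > 0).
  { intros s Hs. apply Rnot_le_lt. intros Hle. pose proof (Hlow s ltac:(lra) Hle). lra. }
  exists g. split; [lra|]. split; auto.
  apply Rle_antisym; auto. apply Rnot_lt_le. intros Hneg.
  destruct (Hc g ltac:(lra) (- phi g) ltac:(lra)) as [d [Hd Hd1]].
  set (s := Rmax 0 (g - d / 2)).
  assert (Hs : 0 <= s < g) by (unfold s; split; [apply Rmax_l|apply Rmax_lub_lt; lra]).
  assert (Rabs (s - g) < d).
  { rewrite Rabs_left by lra. unfold s. pose proof (Rmax_r 0 (g - d / 2)). lra. }
  specialize (Hd1 s ltac:(lra) H). pose proof (Rabs_def2 _ _ Hd1). specialize (Hbefore s Hs). lra.
Qed.

Lemma growth_while_nonneg (q q' : R -> R) K : K > 0 ->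
  (forall t, t >= 0 -> rderiv q t (q' t)) ->
  (forall t, t >= 0 -> q t >= 0 -> q' t >= K * q t) -> q 0 > 0 ->
  forall T, 0 <= T -> q T >= q 0 * exp (K * T).
Proof.
  intros HK Hd Hrate H0.
  assert (Hd' : forall T t, 0 <= t <= T -> rderiv q t (q' t)) by (intros; apply Hd; lra).
  assert (Hpos : forall T, 0 <= T -> q T > 0).
  { intros T HT. apply Rnot_le_lt. intros HqT.
    assert (Hc : forall t, 0 <= t <= T -> rcont q t) by (intros t Ht; apply (rderiv_cont q t (q' t)); apply Hd; lra).
    destruct (first_zero q T Hc H0 HT HqT) as [ts [Hts [Hz Hbef]]].
    assert (q ts >= q 0 * exp (K * ts)).
    { apply (gronwall_growth q q' K ts HK ltac:(lra) (Hd' ts)). intros t Ht. apply Hrate; [lra|].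
      destruct (Req_dec t ts) as [->|]; [lra|]. specialize (Hbef t ltac:(lra)). lra. }
    pose proof (exp_pos (K * ts)). nra. }
  intros T HT. apply (gronwall_growth q q' K T HK HT (Hd' T)).
  intros t Ht. apply Hrate; [lra|]. specialize (Hpos t ltac:(lra)). lra.
Qed.

Lemma gronwall_bootstrap (psi psi' : R -> R) K M T : K > 0 -> 0 <= T -> 0 <= psi 0 ->
  (forall t, 0 <= t <= T -> rderiv psi t (psi' t)) ->
  (forall t, 0 < t <= T -> psi t <= M -> psi' t <= K * psi t) ->
  psi 0 * exp (K * T) < M ->
  forall t, 0 <= t <= T -> psi t <= psi 0 * exp (K * t).
Proof.
  intros HK HT H0 Hd Hrate Hsmall.
  assert (Hexp : forall t, 0 <= t <= T -> psi 0 * exp (K * t) <= psi 0 * exp (K * T)).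
  { intros t Ht. apply Rmult_le_compat_l; auto. apply exp_mono. apply Rmult_le_compat_l; lra. }
  assert (Hd' : forall t1, 0 <= t1 <= T -> forall t, 0 <= t <= t1 -> rderiv psi t (psi' t))
    by (intros; apply Hd; lra).
  assert (Hbelow : forall t, 0 <= t <= T -> psi t < M).
  { intros t Ht. apply Rnot_le_lt. intros Hle.
    destruct (first_zero (fun r => M - psi r) t) as [ts [Hts [Hz Hbef]]].
    { intros r Hr eps Heps. destruct (rderiv_cont _ _ _ (Hd r ltac:(lra)) eps Heps) as [dd [Hdd H]].
      exists dd. split; auto. intros s Hs Hsr. specialize (H s Hs Hsr).
      replace (M - psi s - (M - psi r)) with (- (psi s - psi r)) by ring. rewrite Rabs_Ropp; auto. }
    { pose proof (Hexp 0 ltac:(lra)). rewrite Rmult_0_r, exp_0 in H. simpl; lra. }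
    { lra. }
    { simpl; lra. }
    simpl in Hz, Hbef.
    assert (psi ts <= psi 0 * exp (K * ts)).
    { assert (Hts' : 0 <= ts <= T) by lra.
      apply (gronwall_homogeneous psi psi' K ts HK ltac:(lra) (Hd' ts Hts')).
      intros r Hr. apply Hrate; [lra|].
      destruct (Req_dec r ts) as [->|]; [lra|]. specialize (Hbef r ltac:(lra)). lra. }
    pose proof (Hexp ts ltac:(lra)). lra. }
  intros t Ht. apply (gronwall_homogeneous psi psi' K t HK ltac:(lra) (Hd' t Ht)).
  intros r Hr. apply Hrate; [lra|]. left. apply Hbelow. lra.
Qed.

Lemma inv_succ_small eps : eps > 0 -> exists N : nat, forall k, (N <= k)%nat -> / (INR k + 1) < eps.
Proof.
  intros. destruct (archimed_cor1 eps H) as [N [HN HN0]]. exists N. intros k Hk.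
  apply Rle_lt_trans with (/ INR N); auto. apply Rinv_le_contravar; [apply lt_0_INR; auto|].
  apply le_INR in Hk. lra.
Qed.

Lemma cluster_point_in u T l : (forall k, 0 <= u k <= T) -> ValAdh u l -> 0 <= l <= T.
Proof.
  intros Hu Hv. split; apply Rnot_lt_le; intros Hl.
  - destruct (Hv (disc l (mkposreal (- l) ltac:(lra))) 0%nat) as [p [_ Hp]].
    { exists (mkposreal (- l) ltac:(lra)). intros y Hy; auto. }
    unfold disc in Hp; simpl in Hp. pose proof (Rabs_def2 _ _ Hp). specialize (Hu p). lra.
  - destruct (Hv (disc l (mkposreal (l - T) ltac:(lra))) 0%nat) as [p [_ Hp]].
    { exists (mkposreal (l - T) ltac:(lra)). intros y Hy; auto. }
    unfold disc in Hp; simpl in Hp. pose proof (Rabs_def2 _ _ Hp). specialize (Hu p). lra.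
Qed.

(* Lebesgue-number form of the compactness of [0,T]: a property P s d, monotone
   in the radius d and holding locally around every point with a local radius,
   holds on all of [0,T] with one uniform radius. *)
Lemma compact_uniform_radius (P : R -> R -> Prop) T : 0 <= T ->
  (forall s d d', P s d -> 0 < d' <= d -> P s d') ->
  (forall t, 0 <= t <= T -> exists d, d > 0 /\ forall s, 0 <= s <= T -> Rabs (s - t) < d -> P s d) ->
  exists d, d > 0 /\ forall s, 0 <= s <= T -> P s d.
Proof.
  intros HT Hmono Hloc. apply NNPP. intros Hno.
  assert (Hbad : forall k : nat, exists s, 0 <= s <= T /\ ~ P s (/ (INR k + 1))).
  { intros k. apply NNPP. intros Hk. apply Hno. exists (/ (INR k + 1)). split.
    - apply Rinv_0_lt_compat. pose proof (pos_INR k); lra.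
    - intros s Hs. apply NNPP. intros Hns. apply Hk. exists s; auto. }
  set (u := fun k => epsilon (inhabits 0) (fun s => 0 <= s <= T /\ ~ P s (/ (INR k + 1)))).
  assert (Hu : forall k, 0 <= u k <= T /\ ~ P (u k) (/ (INR k + 1))) by (intros k; apply epsilon_spec; auto).
  destruct (Bolzano_Weierstrass u (fun c => 0 <= c <= T) (compact_P3 0 T) ltac:(intros k; apply Hu)) as [l Hl].
  assert (Hlin : 0 <= l <= T) by (apply (cluster_point_in u T); auto; intros; apply Hu).
  destruct (Hloc l Hlin) as [d [Hd Hd1]].
  destruct (inv_succ_small d Hd) as [N HN].
  destruct (Hl (disc l (mkposreal d Hd)) N) as [p [Hp Hp1]].
  { exists (mkposreal d Hd). intros y Hy; auto. }
  unfold disc in Hp1; simpl in Hp1. destruct (Hu p) as [Hup Hnp]. apply Hnp.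
  apply (Hmono _ d); [apply Hd1; auto|]. split.
  - apply Rinv_0_lt_compat. pose proof (pos_INR p); lra.
  - left. apply HN; auto.
Qed.

Lemma fin_common_radius N (P : Fin.t N -> R -> Prop) :
  (forall i d d', P i d -> 0 < d' <= d -> P i d') ->
  (forall i, exists d, d > 0 /\ P i d) -> exists d, d > 0 /\ forall i, P i d.
Proof.
  induction N; intros Hm Hex.
  - exists 1. split; [lra|]. intros i; inversion i.
  - destruct (IHN (fun i => P (Fin.FS i))) as [d1 [Hd1 H1]].
    { intros; eapply Hm; eauto. }
    { intros; apply Hex. }
    destruct (Hex Fin.F1) as [d0 [Hd0 H0]]. exists (Rmin d0 d1). split; [apply Rmin_pos; auto|].
    intros i. pattern i; apply Fin.caseS'.
    + eapply Hm; eauto. split; [apply Rmin_pos; auto|apply Rmin_l].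
    + intros p. eapply Hm; [apply H1|]. split; [apply Rmin_pos; auto|apply Rmin_r].
Qed.

Lemma fin_common_index N (P : Fin.t N -> nat -> Prop) :
  (forall i K K', P i K -> (K <= K')%nat -> P i K') ->
  (forall i, exists K, P i K) -> exists K, forall i, P i K.
Proof.
  induction N; intros Hm Hex.
  - exists 0%nat. intros i; inversion i.
  - destruct (IHN (fun i => P (Fin.FS i))) as [K1 H1].
    { intros; eapply Hm; eauto. }
    { intros; apply Hex. }
    destruct (Hex Fin.F1) as [K0 H0]. exists (Nat.max K0 K1).
    intros i. pattern i; apply Fin.caseS'.
    + eapply Hm; eauto. lia.
    + intros p. eapply Hm; [apply H1|]. lia.
Qed.

Definition conv (u : nat -> R) (l : R) : Prop :=
  forall eps, eps > 0 -> exists N, forall k, (N <= k)%nat -> Rabs (u k - l) < eps.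
Definition strictly_increasing (s : nat -> nat) : Prop := forall k, (s k < s (S k))%nat.

Lemma strictly_increasing_ge s : strictly_increasing s -> forall k, (k <= s k)%nat.
Proof. intros H k; induction k; [lia|]. specialize (H k). lia. Qed.
Lemma strictly_increasing_comp s1 s2 : strictly_increasing s1 -> strictly_increasing s2 ->
  strictly_increasing (fun k => s1 (s2 k)).
Proof.
  intros H1 H2 k. simpl. specialize (H2 k).
  assert (forall a b, (a < b)%nat -> (s1 a < s1 b)%nat).
  { intros a b Hab. induction Hab; [apply H1|]. specialize (H1 m). lia. }
  auto.
Qed.
Lemma conv_subseq u l s : strictly_increasing s -> conv u l -> conv (fun k => u (s k)) l.
Proof.
  intros Hs H eps Heps. destruct (H eps Heps) as [N HN]. exists N. intros k Hk.
  apply HN. pose proof (strictly_increasing_ge s Hs k). lia.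
Qed.

Lemma bolzano_weierstrass_R (u : nat -> R) M : (forall k, Rabs (u k) <= M) ->
  exists s, strictly_increasing s /\ exists l, conv (fun k => u (s k)) l.
Proof.
  intros Hb.
  destruct (Bolzano_Weierstrass u (fun c => - M <= c <= M) (compact_P3 (- M) M)) as [l Hl].
  { intros k. specialize (Hb k). pose proof (Rle_abs (u k)). pose proof (Rle_abs (- u k)).
    rewrite Rabs_Ropp in H0. lra. }
  set (next := fun (k p : nat) => epsilon (inhabits 0%nat)
                 (fun q => (p < q)%nat /\ Rabs (u q - l) < / (INR k + 1))).
  assert (Hnext : forall k p, (p < next k p)%nat /\ Rabs (u (next k p) - l) < / (INR k + 1)).
  { intros k p. apply epsilon_spec.
    assert (Hpos : 0 < / (INR k + 1)) by (apply Rinv_0_lt_compat; pose proof (pos_INR k); lra).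
    destruct (Hl (disc l (mkposreal _ Hpos)) (S p)) as [q [Hq Hq1]].
    { exists (mkposreal _ Hpos). intros y Hy; auto. }
    exists q. split; [lia|]. apply Hq1. }
  set (s := fix s (k : nat) : nat := match k with O => next O O | S k' => next (S k') (s k') end).
  exists s. split.
  - intros k. simpl. apply Hnext.
  - exists l. intros eps Heps. destruct (inv_succ_small eps Heps) as [N HN]. exists N. intros k Hk.
    eapply Rlt_trans; [|apply (HN k Hk)]. destruct k; simpl; apply Hnext.
Qed.

Lemma bolzano_weierstrass_vec N (u : nat -> vec N) M : (forall k i, Rabs (u k i) <= M) ->
  exists s, strictly_increasing s /\ exists l : vec N, forall i, conv (fun k => u (s k) i) (l i).
Proof.
  revert u. induction N; intros u Hb.
  - exists (fun k => k). split; [intros k; lia|]. exists (fun _ => 0). intros i; inversion i.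
  - destruct (bolzano_weierstrass_R (fun k => u k Fin.F1) M) as [s1 [Hs1 [l1 Hl1]]].
    { intros; apply Hb. }
    destruct (IHN (fun k i => u (s1 k) (Fin.FS i))) as [s2 [Hs2 [l2 Hl2]]].
    { intros; apply Hb. }
    exists (fun k => s1 (s2 k)). split; [apply strictly_increasing_comp; auto|].
    exists (fun i => Fin.caseS' i (fun _ => R) l1 (fun p => l2 p)).
    intros i. pattern i; apply Fin.caseS'; simpl.
    + apply (conv_subseq (fun k => u (s1 k) Fin.F1)); auto.
    + intros p. apply Hl2.
Qed.

Lemma vnorm_coord_small N (w : vec N) e : (forall i, Rabs (w i) < e) -> vnorm w <= INR N * e.
Proof.
  intros H. eapply Rle_trans; [apply vnorm_le_sum|]. rewrite <- vsum_const.
  apply vsum_le. intros; left; auto.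
Qed.

Lemma bolzano_weierstrass_X n m (u : nat -> X n m) M : (forall k, Xnorm (u k) <= M) ->
  exists v, forall rho, rho > 0 -> forall N0, exists k, (N0 <= k)%nat /\ Xnorm (Xsub (u k) v) < rho.
Proof.
  intros Hb.
  destruct (bolzano_weierstrass_vec n (fun k => fst (u k)) M) as [s1 [Hs1 [l1 Hl1]]].
  { intros k i. eapply Rle_trans; [apply vnorm_coord|]. eapply Rle_trans; [apply Xnorm_fst|]. auto. }
  destruct (bolzano_weierstrass_vec m (fun k => snd (u (s1 k))) M) as [s2 [Hs2 [l2 Hl2]]].
  { intros k i. eapply Rle_trans; [apply vnorm_coord|]. eapply Rle_trans; [apply Xnorm_snd|]. auto. }
  exists (l1, l2). intros rho Hrho N0.
  pose proof (pos_INR n); pose proof (pos_INR m).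
  set (e := rho / (INR n + INR m + 1)). assert (He : e > 0) by (apply Rdiv_lt_0_compat; lra).
  destruct (fin_common_index n (fun i K => forall k, (K <= k)%nat -> Rabs (fst (u (s1 (s2 k))) i - l1 i) < e))
    as [K1 HK1].
  { intros i K K' HP HK k Hk. apply HP. lia. }
  { intros i. destruct (conv_subseq _ _ s2 Hs2 (Hl1 i) e He) as [K HK]. exists K. auto. }
  destruct (fin_common_index m (fun i K => forall k, (K <= k)%nat -> Rabs (snd (u (s1 (s2 k))) i - l2 i) < e))
    as [K2 HK2].
  { intros i K K' HP HK k Hk. apply HP. lia. }
  { intros i. destruct (Hl2 i e He) as [K HK]. exists K. auto. }
  set (k := Nat.max N0 (Nat.max K1 K2)). exists (s1 (s2 k)). split.
  { pose proof (strictly_increasing_ge _ (strictly_increasing_comp _ _ Hs1 Hs2) k). simpl in H1.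
    unfold k in *. lia. }
  eapply Rle_lt_trans; [apply Xnorm_le|]. simpl.
  pose proof (vnorm_coord_small n (vsub (fst (u (s1 (s2 k)))) l1) e ltac:(intros i; apply (HK1 i k); unfold k; lia)).
  pose proof (vnorm_coord_small m (vsub (snd (u (s1 (s2 k)))) l2) e ltac:(intros i; apply (HK2 i k); unfold k; lia)).
  assert ((INR n + INR m) * e < rho).
  { apply Rlt_le_trans with ((INR n + INR m + 1) * e); [apply Rmult_lt_compat_r; lra|].
    right. unfold e. field. lra. }
  lra.
Qed.

Section VectorField.
Variables (n m : nat) (f : X n m -> vec n) (g : X n m -> vec m) (U : X n m -> Prop).
Variables (fa : X n m -> mat n n) (fz : X n m -> mat n m) (ga : X n m -> mat m n) (gz : X n m -> mat m m).
Hypothesis Hf : forall x, U x -> has_partials f x (fa x) (fz x).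
Hypothesis Hg : forall x, U x -> has_partials g x (ga x) (gz x).

Definition F (x : X n m) : X n m := (f x, g x).
Definition DF (x v : X n m) : X n m := blk (fa x) (fz x) (ga x) (gz x) v.
Definition seg (x y : X n m) (s : R) : X n m := Xadd (Xscale (1 - s) x) (Xscale s y).

Lemma seg_sub x y s : Xsub (seg x y s) x = Xscale s (Xsub y x).
Proof. unfold seg; Xext. Qed.

Lemma F_frechet x : U x -> forall eps, eps > 0 -> exists del, del > 0 /\ forall u, Xnorm u < del ->
  Xnorm (Xsub (Xsub (F (Xadd x u)) (F x)) (DF x u)) <= eps * Xnorm u.
Proof.
  intros Hx eps Heps.
  destruct (Hf x Hx (eps / 2) ltac:(lra)) as [d1 [Hd1 K1]].
  destruct (Hg x Hx (eps / 2) ltac:(lra)) as [d2 [Hd2 K2]].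
  exists (Rmin d1 d2). split; [apply Rmin_pos; auto|]. intros u Hu.
  pose proof (Rmin_l d1 d2). pose proof (Rmin_r d1 d2).
  specialize (K1 u ltac:(lra)). specialize (K2 u ltac:(lra)).
  eapply Rle_trans; [apply Xnorm_le|]. unfold F, DF, blk, Xsub; simpl. lra.
Qed.

Lemma F_along_segment x y P s : U (seg x y s) ->
  derivable_pt_lim (fun s => bform 1 P (F (seg x y s))) s (bform 1 P (DF (seg x y s) (Xsub y x))).
Proof.
  intros HU eps Heps. set (D := Xsub y x).
  pose proof (Xnorm_pos _ _ P) as HP. pose proof (Xnorm_pos _ _ D) as HD.
  set (e := eps / (2 * (Xnorm P * Xnorm D + 1))). assert (He : e > 0) by (apply Rdiv_lt_0_compat; nra).
  destruct (F_frechet (seg x y s) HU e He) as [del [Hdel K]].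
  assert (Hdd : del / (Xnorm D + 1) > 0) by (apply Rdiv_lt_0_compat; lra).
  exists (mkposreal _ Hdd). simpl. intros h Hh0 Hh.
  replace (seg x y (s + h)) with (Xadd (seg x y s) (Xscale h D)) by (unfold seg, D; Xext).
  assert (Hu : Xnorm (Xscale h D) < del).
  { rewrite Xnorm_scale. apply Rle_lt_trans with (Rabs h * (Xnorm D + 1)); [pose proof (Rabs_pos h); nra|].
    apply Rlt_le_trans with (del / (Xnorm D + 1) * (Xnorm D + 1)); [apply Rmult_lt_compat_r; lra|].
    right; field; lra. }
  specialize (K _ Hu). set (Rem := Xsub (Xsub (F (Xadd (seg x y s) (Xscale h D))) (F (seg x y s))) (DF (seg x y s) (Xscale h D))) in K.
  replace ((bform 1 P (F (Xadd (seg x y s) (Xscale h D))) - bform 1 P (F (seg x y s))) / h - bform 1 P (DF (seg x y s) D))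
    with (bform 1 P Rem / h) by (unfold Rem, DF; rewrite blk_scale, !bform_subr, bform_scaler; field; auto).
  unfold Rdiv. rewrite Rabs_mult, Rabs_inv.
  pose proof (bform_cauchy_schwarz _ _ 1 P Rem ltac:(lra)).
  rewrite Xnorm_scale in K. assert (Rabs h > 0) by (apply Rabs_pos_lt; auto).
  apply Rmult_lt_reg_r with (Rabs h); auto. rewrite Rmult_assoc, Rinv_l, Rmult_1_r by lra.
  assert (Xnorm P * Xnorm D * e < eps).
  { assert ((Xnorm P * Xnorm D + 1) * e = eps / 2) by (unfold e; field; nra). nra. }
  pose proof (Xnorm_pos _ _ Rem). nra.
Qed.

Lemma segment_mean_value x y P : (forall s, 0 <= s <= 1 -> U (seg x y s)) ->
  exists s, 0 <= s <= 1 /\ bform 1 P (Xsub (F y) (F x)) = bform 1 P (DF (seg x y s) (Xsub y x)).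
Proof.
  intros HU.
  destruct (MVT_cor2 (fun s => bform 1 P (F (seg x y s))) (fun s => bform 1 P (DF (seg x y s) (Xsub y x))) 0 1)
    as [c [Hc1 Hc2]]; [lra|intros; apply F_along_segment, HU; auto|].
  exists c. split; [lra|].
  replace (seg x y 1) with y in Hc1 by (unfold seg; Xext).
  replace (seg x y 0) with x in Hc1 by (unfold seg; Xext).
  rewrite bform_subr. lra.
Qed.

Variables (Gam : X n m -> Prop) (alpha ell : X n m -> R) (c1 d : R).
Hypothesis HUconv : is_convex U.
Hypothesis Hcone : forall x x', U x -> Ccone x x' -> U x' -> Bbox d x x'.
Hypothesis Hell : forall x, U x -> ell x >= 0.
Hypothesis Hc1 : c1 > 0.
Hypothesis Hfa : forall x, U x -> forall a' : vec n, inner a' (mapply (fa x) a') >= alpha x * vnorm a' ^ 2.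
Hypothesis Hgz : forall x, U x -> forall z' : vec m, inner z' (mapply (gz x) z') <= ell x * vnorm z' ^ 2.
Hypothesis Hgap : forall x, U x -> alpha x >= ell x + opnorm (fz x) + opnorm (ga x) + c1.
Hypothesis HGU : forall x, Gam x -> U x.
Hypothesis HGinv : pos_invariant f g Gam.

Lemma cone_expansion xi Da Dz : U xi -> vnorm Dz <= vnorm Da ->
  inner Da (vadd (mapply (fa xi) Da) (mapply (fz xi) Dz))
  - inner Dz (vadd (mapply (ga xi) Da) (mapply (gz xi) Dz)) >= c1 * (vnorm Da * vnorm Da).
Proof.
  intros Hxi Hle. rewrite !inner_addr.
  pose proof (Hfa xi Hxi Da). pose proof (Hgz xi Hxi Dz). pose proof (Hgap xi Hxi). pose proof (Hell xi Hxi).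
  pose proof (inner_opnorm _ _ (fz xi) Da Dz) as Hfz. pose proof (inner_opnorm _ _ (ga xi) Dz Da) as Hga.
  pose proof (opnorm_pos _ _ (fz xi)). pose proof (opnorm_pos _ _ (ga xi)).
  pose proof (vnorm_pos _ Da). pose proof (vnorm_pos _ Dz).
  rewrite <- !Rsqr_pow2 in *. unfold Rsqr in *.
  assert (opnorm (fz xi) * vnorm Da * vnorm Dz <= opnorm (fz xi) * vnorm Da * vnorm Da)
    by (apply Rmult_le_compat_l; nra).
  assert (opnorm (ga xi) * vnorm Dz * vnorm Da <= opnorm (ga xi) * vnorm Da * vnorm Da)
    by (apply Rmult_le_compat_r; [lra|apply Rmult_le_compat_l; lra]).
  assert (ell xi * (vnorm Dz * vnorm Dz) <= ell xi * (vnorm Da * vnorm Da)) by (apply Rmult_le_compat_l; nra).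
  assert (alpha xi * (vnorm Da * vnorm Da)
          >= (ell xi + opnorm (fz xi) + opnorm (ga xi) + c1) * (vnorm Da * vnorm Da))
    by (apply Rmult_ge_compat_r; nra).
  lra.
Qed.

Lemma lorentz_gap_rate (pA pB : R -> X n m) t :
  U (pA t) -> U (pB t) -> bform (-1) (Xsub (pB t) (pA t)) (Xsub (pB t) (pA t)) >= 0 ->
  2 * bform (-1) (Xsub (pB t) (pA t)) (Xsub (F (pB t)) (F (pA t)))
  >= 2 * c1 * bform (-1) (Xsub (pB t) (pA t)) (Xsub (pB t) (pA t)).
Proof.
  intros HA HB Hq. set (D := Xsub (pB t) (pA t)) in *.
  (* B_{-1}(D, W) = B_1(D*, W) with D* the reflection (Da, -Dz) *)
  assert (Hrefl : forall W, bform (-1) D W = bform 1 (fst D, vscale (-1) (snd D)) W)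
    by (intros W; unfold bform; simpl; rewrite inner_scalel; ring).
  rewrite Hrefl.
  destruct (segment_mean_value (pA t) (pB t) (fst D, vscale (-1) (snd D))) as [s [Hs Hmv]].
  { intros s Hs. apply HUconv; auto. }
  rewrite Hmv. fold D. set (xi := seg (pA t) (pB t) s).
  assert (Hxi : U xi) by (apply HUconv; auto).
  assert (Hlhs : bform 1 (fst D, vscale (-1) (snd D)) (DF xi D)
          = inner (fst D) (vadd (mapply (fa xi) (fst D)) (mapply (fz xi) (snd D)))
            - inner (snd D) (vadd (mapply (ga xi) (fst D)) (mapply (gz xi) (snd D))))
    by (unfold bform, DF, blk; simpl; rewrite inner_scalel; ring).
  rewrite Hlhs. rewrite bform_lorentz in *.
  assert (Hcone_D : vnorm (snd D) <= vnorm (fst D)) by (apply le_of_sq; [apply vnorm_pos|lra]).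
  pose proof (cone_expansion xi (fst D) (snd D) Hxi Hcone_D).
  assert (0 <= c1 * (vnorm (snd D) * vnorm (snd D))) by (apply Rmult_le_pos; [lra|apply Rle_0_sqr]).
  nra.
Qed.

(* Graph points of Gamma are pairwise outside the open Lorentz cone: if L were
   positive for two points of Gamma, it would grow exponentially along their
   orbits, but Hypothesis 1 bounds it by d^2 on Gamma. *)
Lemma gamma_lorentz_nonpos x y : Gam x -> Gam y -> Lf x y <= 0.
Proof.
  intros Hx Hy.
  destruct (HGinv x Hx) as [pA [[HA0 HAd] HAG]]. destruct (HGinv y Hy) as [pB [[HB0 HBd] HBG]].
  set (q := fun t => bform (-1) (Xsub (pB t) (pA t)) (Xsub (pB t) (pA t))).
  assert (Hq0 : q 0 = Lf x y) by (unfold q; rewrite HA0, HB0, Lf_bform; reflexivity).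
  assert (Hqd : forall t, t >= 0 ->
            rderiv q t (2 * bform (-1) (Xsub (pB t) (pA t)) (Xsub (F (pB t)) (F (pA t))))).
  { intros t Ht. apply bform_rderiv; [lra|]. apply curve_sub; [apply HBd|apply HAd]; auto. }
  assert (Hqbound : forall T, 0 <= T -> q T > 0 -> q T <= d * d).
  { intros T HT HqT. assert (Hcc : Ccone (pA T) (pB T)).
    { unfold Ccone. rewrite Lf_bform, bform_sub_swap. fold (q T). lra. }
    destruct (Hcone (pA T) (pB T) (HGU _ (HAG T ltac:(lra))) Hcc (HGU _ (HBG T ltac:(lra)))) as [Hb1 _].
    unfold q. rewrite bform_lorentz. simpl.
    pose proof (vnorm_pos _ (vsub (fst (pB T)) (fst (pA T)))).
    pose proof (vnorm_pos _ (vsub (snd (pB T)) (snd (pA T)))). nra. }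
  rewrite <- Hq0. apply Rnot_lt_le. intros Hpos.
  assert (Hgrow := growth_while_nonneg q _ (2 * c1) ltac:(lra) Hqd
                     ltac:(intros t Ht Hqt; apply lorentz_gap_rate; auto) Hpos).
  set (T := d * d / (2 * c1 * q 0)).
  assert (HT : 0 <= T) by (unfold T; apply Rmult_le_pos; [nra|left; apply Rinv_0_lt_compat; nra]).
  pose proof (Hgrow T HT) as H1. pose proof (exp_ineq1_le (2 * c1 * T)).
  pose proof (exp_pos (2 * c1 * T)).
  pose proof (Hqbound T HT ltac:(nra)).
  assert (2 * c1 * T * q 0 = d * d) by (unfold T; field; lra). nra.
Qed.

Hypothesis HUopen : is_open U.
Hypothesis Hfac : mcont_on U fa.
Hypothesis Hfzc : mcont_on U fz.
Hypothesis Hgac : mcont_on U ga.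
Hypothesis Hgzc : mcont_on U gz.

Definition jac_size (x : X n m) : R := mnorm1 (fa x) + mnorm1 (fz x) + mnorm1 (ga x) + mnorm1 (gz x).
Definition jac_dist (x y : X n m) : R :=
  mnorm1 (msub (fa x) (fa y)) + mnorm1 (msub (fz x) (fz y))
  + mnorm1 (msub (ga x) (ga y)) + mnorm1 (msub (gz x) (gz y)).

Lemma jac_dist_nonneg x y : 0 <= jac_dist x y.
Proof.
  unfold jac_dist. pose proof (mnorm1_pos _ _ (msub (fa x) (fa y))). pose proof (mnorm1_pos _ _ (msub (fz x) (fz y))).
  pose proof (mnorm1_pos _ _ (msub (ga x) (ga y))). pose proof (mnorm1_pos _ _ (msub (gz x) (gz y))). lra.
Qed.
Lemma jac_dist_sym x y : jac_dist x y = jac_dist y x.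
Proof.
  unfold jac_dist. rewrite (mnorm1_msub_sym _ _ (fa x)), (mnorm1_msub_sym _ _ (fz x)),
    (mnorm1_msub_sym _ _ (ga x)), (mnorm1_msub_sym _ _ (gz x)). auto.
Qed.
Lemma jac_dist_tri x y z : jac_dist x z <= jac_dist x y + jac_dist y z.
Proof.
  unfold jac_dist. pose proof (mnorm1_tri _ _ (fa x) (fa y) (fa z)). pose proof (mnorm1_tri _ _ (fz x) (fz y) (fz z)).
  pose proof (mnorm1_tri _ _ (ga x) (ga y) (ga z)). pose proof (mnorm1_tri _ _ (gz x) (gz y) (gz z)). lra.
Qed.
Lemma jac_size_le x y : jac_size x <= jac_size y + jac_dist x y.
Proof.
  unfold jac_size, jac_dist. pose proof (mnorm1_le _ _ (fa x) (fa y)). pose proof (mnorm1_le _ _ (fz x) (fz y)).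
  pose proof (mnorm1_le _ _ (ga x) (ga y)). pose proof (mnorm1_le _ _ (gz x) (gz y)). lra.
Qed.
Lemma jac_size_nonneg x : 0 <= jac_size x.
Proof.
  unfold jac_size. pose proof (mnorm1_pos _ _ (fa x)). pose proof (mnorm1_pos _ _ (fz x)).
  pose proof (mnorm1_pos _ _ (ga x)). pose proof (mnorm1_pos _ _ (gz x)). lra.
Qed.
Lemma DF_bound x v : Xnorm (DF x v) <= jac_size x * Xnorm v.
Proof. apply blk_bound. Qed.
Lemma DF_diff_bound x y v : Xnorm (Xsub (DF x v) (DF y v)) <= jac_dist x y * Xnorm v.
Proof. unfold DF. rewrite blk_msub. apply blk_bound. Qed.

Lemma mnorm1_cont k l (M : X n m -> mat k l) : mcont_on U M -> forall x, U x -> forall eta, eta > 0 ->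
  exists del, del > 0 /\ forall y, U y -> Xnorm (Xsub y x) < del -> mnorm1 (msub (M y) (M x)) < eta.
Proof.
  intros HM x Hx eta Heta. pose proof (pos_INR k) as Hk; pose proof (pos_INR l) as Hl.
  set (e := eta / (INR k * INR l + 1)). assert (He : e > 0) by (apply Rdiv_lt_0_compat; nra).
  destruct (fin_common_radius k (fun i del => forall y, U y -> Xnorm (Xsub y x) < del ->
                                   forall j, Rabs (M y i j - M x i j) < e)) as [del [Hdel H]].
  { intros i d1 d2 H1 H2 y Hy Hyx. apply H1; auto. lra. }
  { intros i. destruct (fin_common_radius l (fun j del => forall y, U y -> Xnorm (Xsub y x) < del ->
                                                Rabs (M y i j - M x i j) < e)) as [del [Hdel Hi]].
    { intros j d1 d2 H1 H2 y Hy Hyx. apply H1; auto. lra. }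
    { intros j. destruct (HM i j x Hx e He) as [del [Hdel Hij]]. exists del. split; auto. }
    exists del. split; auto. }
  exists del. split; auto. intros y Hy Hyx. unfold mnorm1, msub.
  apply Rle_lt_trans with (vsum k (fun _ => vsum l (fun _ => e))).
  { apply vsum_le; intros i. apply vsum_le; intros j. left. apply H; auto. }
  rewrite vsum_const, vsum_const.
  assert (e * (INR k * INR l + 1) = eta) by (unfold e; field; nra). nra.
Qed.

Lemma jac_dist_cont x : U x -> forall eta, eta > 0 ->
  exists del, del > 0 /\ forall y, U y -> Xnorm (Xsub y x) < del -> jac_dist y x < eta.
Proof.
  intros Hx eta Heta.
  destruct (mnorm1_cont _ _ fa Hfac x Hx (eta / 4) ltac:(lra)) as [d1 [Hd1 K1]].
  destruct (mnorm1_cont _ _ fz Hfzc x Hx (eta / 4) ltac:(lra)) as [d2 [Hd2 K2]].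
  destruct (mnorm1_cont _ _ ga Hgac x Hx (eta / 4) ltac:(lra)) as [d3 [Hd3 K3]].
  destruct (mnorm1_cont _ _ gz Hgzc x Hx (eta / 4) ltac:(lra)) as [d4 [Hd4 K4]].
  exists (Rmin (Rmin d1 d2) (Rmin d3 d4)). split; [repeat apply Rmin_pos; auto|].
  intros y Hy Hyx.
  pose proof (Rmin_l (Rmin d1 d2) (Rmin d3 d4)). pose proof (Rmin_r (Rmin d1 d2) (Rmin d3 d4)).
  pose proof (Rmin_l d1 d2). pose proof (Rmin_r d1 d2). pose proof (Rmin_l d3 d4). pose proof (Rmin_r d3 d4).
  unfold jac_dist. specialize (K1 y Hy ltac:(lra)). specialize (K2 y Hy ltac:(lra)).
  specialize (K3 y Hy ltac:(lra)). specialize (K4 y Hy ltac:(lra)). lra.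
Qed.

(* Uniform estimates in a tube around a compact piece of a trajectory in U. *)
Section Tube.
Variable phi0 : R -> X n m.
Hypothesis Hp0d : forall t, t >= 0 -> curve_deriv phi0 t (F (phi0 t)).
Hypothesis Hp0U : forall t, t >= 0 -> U (phi0 t).

Lemma jacobian_tube T eta : 0 <= T -> eta > 0 -> exists del, del > 0 /\ forall s, 0 <= s <= T ->
  forall x, Xnorm (Xsub x (phi0 s)) < del -> U x /\ jac_dist x (phi0 s) < eta.
Proof.
  intros HT Heta.
  apply (compact_uniform_radius
           (fun s del => forall x, Xnorm (Xsub x (phi0 s)) < del -> U x /\ jac_dist x (phi0 s) < eta) T HT).
  { intros s d1 d2 H1 H2 x Hx. apply H1. lra. }
  intros t Ht. pose proof (Hp0U t ltac:(lra)) as Ut.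
  destruct (HUopen _ Ut) as [r [Hr Hr1]].
  destruct (jac_dist_cont _ Ut (eta / 2) ltac:(lra)) as [rho [Hrho Hrho1]].
  set (r' := Rmin r rho). assert (Hr' : r' > 0) by (apply Rmin_pos; lra).
  pose proof (Rmin_l r rho). pose proof (Rmin_r r rho). fold r' in H, H0.
  destruct (curve_cont _ _ phi0 t _ (Hp0d t ltac:(lra)) (r' / 2) ltac:(lra)) as [dc [Hdc Hdc1]].
  exists (Rmin dc (r' / 2)). split; [apply Rmin_pos; lra|].
  intros s Hs Hst x Hx. pose proof (Rmin_l dc (r' / 2)). pose proof (Rmin_r dc (r' / 2)).
  specialize (Hdc1 s ltac:(lra) ltac:(lra)).
  assert (Hxt : Xnorm (Xsub x (phi0 t)) < r') by (pose proof (Xnorm_tri _ _ x (phi0 s) (phi0 t)); lra).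
  assert (Ux : U x) by (apply Hr1; lra). split; auto.
  pose proof (Hrho1 x Ux ltac:(lra)). pose proof (Hrho1 (phi0 s) (Hp0U s ltac:(lra)) ltac:(lra)).
  pose proof (jac_dist_tri x (phi0 t) (phi0 s)) as Htri. rewrite (jac_dist_sym (phi0 t) (phi0 s)) in Htri. lra.
Qed.

Lemma jacobian_bounded T : 0 <= T -> exists M, M >= 0 /\ forall s, 0 <= s <= T -> jac_size (phi0 s) <= M.
Proof.
  intros HT.
  destruct (compact_uniform_radius (fun s del => jac_size (phi0 s) <= / del) T HT) as [del [Hdel H]].
  { intros s d1 d2 H1 H2. eapply Rle_trans; [apply H1|]. apply Rinv_le_contravar; lra. }
  { intros t Ht. pose proof (Hp0U t ltac:(lra)) as Ut.
    destruct (jac_dist_cont _ Ut 1 ltac:(lra)) as [rho [Hrho Hrho1]].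
    destruct (curve_cont _ _ phi0 t _ (Hp0d t ltac:(lra)) rho Hrho) as [dc [Hdc Hdc1]].
    pose proof (jac_size_nonneg (phi0 t)).
    set (r := Rmin dc (/ (jac_size (phi0 t) + 1))).
    assert (Hr : 0 < r) by (apply Rmin_pos; auto; apply Rinv_0_lt_compat; lra).
    exists r. split; auto. intros s Hs Hst.
    pose proof (Rmin_l dc (/ (jac_size (phi0 t) + 1))) as Hr1.
    pose proof (Rmin_r dc (/ (jac_size (phi0 t) + 1))) as Hr2. fold r in Hr1, Hr2.
    pose proof (Hrho1 (phi0 s) (Hp0U s ltac:(lra)) (Hdc1 s ltac:(lra) ltac:(lra))).
    pose proof (jac_size_le (phi0 s) (phi0 t)).
    assert (jac_size (phi0 t) + 1 <= / r).
    { rewrite <- (Rinv_inv (jac_size (phi0 t) + 1)). apply Rinv_le_contravar; auto. }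
    lra. }
  exists (/ del). split; [left; apply Rinv_0_lt_compat; lra|auto].
Qed.

Lemma bounded_jacobian_tube T : 0 <= T -> exists del K, del > 0 /\ K >= 0 /\
  forall s, 0 <= s <= T -> forall x, Xnorm (Xsub x (phi0 s)) < del -> U x /\ jac_size x <= K.
Proof.
  intros HT. destruct (jacobian_tube T 1 HT ltac:(lra)) as [del [Hdel H1]].
  destruct (jacobian_bounded T HT) as [M [HM HM1]].
  exists del, (M + 1). split; auto. split; [lra|]. intros s Hs x Hx.
  destruct (H1 s Hs x Hx) as [Ux HJ]. split; auto.
  pose proof (jac_size_le x (phi0 s)). pose proof (HM1 s Hs). lra.
Qed.

Lemma distance_rate (B : R -> X n m) t del K :
  (forall x, Xnorm (Xsub x (phi0 t)) < del -> U x /\ jac_size x <= K) ->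
  Xnorm (Xsub (B t) (phi0 t)) < del ->
  2 * bform 1 (Xsub (B t) (phi0 t)) (Xsub (F (B t)) (F (phi0 t)))
  <= 2 * K * bform 1 (Xsub (B t) (phi0 t)) (Xsub (B t) (phi0 t)).
Proof.
  intros Htube HD. set (D := Xsub (B t) (phi0 t)) in *. pose proof (Xnorm_pos _ _ D).
  assert (Hseg : forall s, 0 <= s <= 1 -> Xnorm (Xsub (seg (phi0 t) (B t) s) (phi0 t)) < del).
  { intros s Hs. rewrite seg_sub, Xnorm_scale, Rabs_pos_eq by lra. fold D. nra. }
  destruct (segment_mean_value (phi0 t) (B t) D) as [s [Hs Hmv]].
  { intros s Hs. apply (Htube _ (Hseg s Hs)). }
  rewrite Hmv. fold D. set (xi := seg (phi0 t) (B t) s).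
  destruct (Htube xi (Hseg s Hs)) as [_ HK].
  pose proof (bform_cs_upper _ _ 1 D (DF xi D) ltac:(lra)).
  pose proof (DF_bound xi D). pose proof (jac_size_nonneg xi). rewrite <- Xnorm_sq.
  assert (Xnorm D * Xnorm (DF xi D) <= K * (Xnorm D * Xnorm D)).
  { apply Rle_trans with (Xnorm D * (jac_size xi * Xnorm D)); [apply Rmult_le_compat_l; lra|].
    replace (K * (Xnorm D * Xnorm D)) with (Xnorm D * (K * Xnorm D)) by ring.
    apply Rmult_le_compat_l; [lra|]. apply Rmult_le_compat_r; lra. }
  lra.
Qed.

Lemma nearby_solution T del K (B : R -> X n m) : 0 <= T -> del > 0 -> K >= 0 ->
  (forall s, 0 <= s <= T -> forall x, Xnorm (Xsub x (phi0 s)) < del -> U x /\ jac_size x <= K) ->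
  (forall t, t >= 0 -> curve_deriv B t (F (B t))) ->
  bform 1 (Xsub (B 0) (phi0 0)) (Xsub (B 0) (phi0 0)) * exp (2 * (K + 1) * T) < del * del / 4 ->
  forall t, 0 <= t <= T -> bform 1 (Xsub (B t) (phi0 t)) (Xsub (B t) (phi0 t))
                           <= bform 1 (Xsub (B 0) (phi0 0)) (Xsub (B 0) (phi0 0)) * exp (2 * (K + 1) * t).
Proof.
  intros HT Hdel HK Htube HB Hsmall.
  apply (gronwall_bootstrap (fun t => bform 1 (Xsub (B t) (phi0 t)) (Xsub (B t) (phi0 t)))
           (fun t => 2 * bform 1 (Xsub (B t) (phi0 t)) (Xsub (F (B t)) (F (phi0 t))))
           (2 * (K + 1)) (del * del / 4) T); auto; try lra.
  - apply bform_euclid_pos.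
  - intros t Ht. apply bform_rderiv; [lra|]. apply curve_sub; [apply HB|apply Hp0d]; lra.
  - intros t Ht Hle. set (D := Xsub (B t) (phi0 t)) in *.
    assert (HD : Xnorm D < del).
    { rewrite <- Xnorm_sq in Hle. pose proof (Xnorm_pos _ _ D). nra. }
    pose proof (distance_rate B t del K (Htube t ltac:(lra)) HD). pose proof (bform_euclid_pos _ _ D).
    fold D in H. nra.
Qed.

Lemma nearby_solution_norm T del K (B : R -> X n m) a : 0 <= T -> del > 0 -> K >= 0 ->
  (forall s, 0 <= s <= T -> forall x, Xnorm (Xsub x (phi0 s)) < del -> U x /\ jac_size x <= K) ->
  (forall t, t >= 0 -> curve_deriv B t (F (B t))) ->
  Xnorm (Xsub (B 0) (phi0 0)) <= a -> a * sqrt (exp (2 * (K + 1) * T)) < del / 2 ->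
  forall s, 0 <= s <= T -> Xnorm (Xsub (B s) (phi0 s)) <= a * sqrt (exp (2 * (K + 1) * T)).
Proof.
  intros HT Hdel HK Htube HB Ha Hsmall.
  set (r := sqrt (exp (2 * (K + 1) * T))) in *.
  assert (Hr2 : r * r = exp (2 * (K + 1) * T)) by (apply sqrt_sqrt; left; apply exp_pos).
  assert (Hr0 : 0 <= r) by apply sqrt_pos.
  pose proof (Xnorm_pos _ _ (Xsub (B 0) (phi0 0))).
  set (b0 := bform 1 (Xsub (B 0) (phi0 0)) (Xsub (B 0) (phi0 0))).
  assert (Hb0 : b0 <= a * a) by (unfold b0; rewrite <- Xnorm_sq; apply Rmult_le_compat; lra).
  assert (Hgrow : forall s, 0 <= s <= T -> b0 * exp (2 * (K + 1) * s) <= a * r * (a * r)).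
  { intros s Hs. replace (a * r * (a * r)) with (a * a * (r * r)) by ring. rewrite Hr2.
    apply Rmult_le_compat; try lra.
    - apply bform_euclid_pos.
    - left; apply exp_pos.
    - apply exp_mono. apply Rmult_le_compat_l; lra. }
  assert (Har : 0 <= a * r) by (apply Rmult_le_pos; lra).
  intros s Hs. apply le_of_sq; [lra|]. rewrite Xnorm_sq.
  eapply Rle_trans; [apply (nearby_solution T del K B HT Hdel HK Htube HB); [|lra]|].
  - eapply Rle_lt_trans; [apply (Hgrow T); lra|]. nra.
  - apply Hgrow; lra.
Qed.

Definition lin_error (B y : R -> X n m) (c t : R) : X n m :=
  Xsub (Xsub (B t) (phi0 t)) (Xscale c (y t)).

Lemma linearization_rate (B y : R -> X n m) c t del K eta Cd :
  (forall x, Xnorm (Xsub x (phi0 t)) < del -> U x /\ jac_dist x (phi0 t) < eta) ->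
  jac_size (phi0 t) <= K -> eta > 0 ->
  Xnorm (Xsub (B t) (phi0 t)) < del -> Xnorm (Xsub (B t) (phi0 t)) <= Cd ->
  2 * bform 1 (lin_error B y c t) (Xsub (Xsub (F (B t)) (F (phi0 t))) (Xscale c (DF (phi0 t) (y t))))
  <= (2 * K + 1) * bform 1 (lin_error B y c t) (lin_error B y c t) + eta * eta * (Cd * Cd).
Proof.
  intros Htube HK Heta HD1 HD2. set (D := Xsub (B t) (phi0 t)) in *. set (E := lin_error B y c t).
  pose proof (Xnorm_pos _ _ D).
  assert (Hseg : forall s, 0 <= s <= 1 -> Xnorm (Xsub (seg (phi0 t) (B t) s) (phi0 t)) < del).
  { intros s Hs. rewrite seg_sub, Xnorm_scale, Rabs_pos_eq by lra. fold D. nra. }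
  destruct (segment_mean_value (phi0 t) (B t) E) as [s [Hs Hmv]].
  { intros s Hs. apply (Htube _ (Hseg s Hs)). }
  set (xi := seg (phi0 t) (B t) s) in *. fold D in Hmv.
  destruct (Htube xi (Hseg s Hs)) as [_ Hjd].
  (* split DF(xi) D - c DF(phi0) y = (DF(xi) - DF(phi0)) D + DF(phi0) E *)
  assert (Hsplit : bform 1 E (Xsub (Xsub (F (B t)) (F (phi0 t))) (Xscale c (DF (phi0 t) (y t))))
          = bform 1 E (Xsub (DF xi D) (DF (phi0 t) D)) + bform 1 E (DF (phi0 t) E)).
  { rewrite bform_subr, bform_scaler, Hmv. unfold E, lin_error, DF. fold D.
    rewrite blk_sub, blk_scale, !bform_subr, !bform_scaler. ring. }
  rewrite Hsplit, <- Xnorm_sq.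
  pose proof (bform_cs_upper _ _ 1 E (Xsub (DF xi D) (DF (phi0 t) D)) ltac:(lra)).
  pose proof (bform_cs_upper _ _ 1 E (DF (phi0 t) E) ltac:(lra)).
  pose proof (DF_diff_bound xi (phi0 t) D). pose proof (DF_bound (phi0 t) E).
  pose proof (jac_dist_nonneg xi (phi0 t)). pose proof (jac_size_nonneg (phi0 t)).
  pose proof (Xnorm_pos _ _ E).
  assert (HdiffE : Xnorm (Xsub (DF xi D) (DF (phi0 t) D)) <= eta * Cd)
    by (eapply Rle_trans; [eassumption|]; apply Rmult_le_compat; lra).
  assert (HsizeE : Xnorm (DF (phi0 t) E) <= K * Xnorm E)
    by (eapply Rle_trans; [eassumption|]; apply Rmult_le_compat_r; lra).
  assert (Xnorm E * Xnorm (Xsub (DF xi D) (DF (phi0 t) D)) <= Xnorm E * (eta * Cd))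
    by (apply Rmult_le_compat_l; lra).
  assert (Xnorm E * Xnorm (DF (phi0 t) E) <= Xnorm E * (K * Xnorm E)) by (apply Rmult_le_compat_l; lra).
  pose proof (Rle_0_sqr (Xnorm E - eta * Cd)). unfold Rsqr in *. nra.
Qed.

Lemma linearization_error T del K eta Cd c (B y : R -> X n m) :
  0 <= T -> K >= 0 -> eta > 0 ->
  (forall s, 0 <= s <= T -> forall x, Xnorm (Xsub x (phi0 s)) < del -> U x /\ jac_dist x (phi0 s) < eta) ->
  (forall s, 0 <= s <= T -> jac_size (phi0 s) <= K) ->
  (forall t, t >= 0 -> curve_deriv B t (F (B t))) ->
  (forall t, t >= 0 -> curve_deriv y t (DF (phi0 t) (y t))) ->
  (forall s, 0 <= s <= T -> Xnorm (Xsub (B s) (phi0 s)) < del /\ Xnorm (Xsub (B s) (phi0 s)) <= Cd) ->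
  Xnorm (lin_error B y c T) * Xnorm (lin_error B y c T)
  <= (Xnorm (lin_error B y c 0) * Xnorm (lin_error B y c 0) + eta * eta * (Cd * Cd) / (2 * K + 1))
     * exp ((2 * K + 1) * T).
Proof.
  intros HT HK Heta Htube HKb HB Hy HD. rewrite !Xnorm_sq.
  pose proof (gronwall_le (fun t => bform 1 (lin_error B y c t) (lin_error B y c t))
                (fun t => 2 * bform 1 (lin_error B y c t)
                                (Xsub (Xsub (F (B t)) (F (phi0 t))) (Xscale c (DF (phi0 t) (y t)))))
                (2 * K + 1) (eta * eta * (Cd * Cd)) T ltac:(lra) ltac:(nra) HT) as Hgron.
  assert (0 <= eta * eta * (Cd * Cd) / (2 * K + 1))
    by (apply Rmult_le_pos; [nra|left; apply Rinv_0_lt_compat; lra]).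
  pose proof (exp_pos ((2 * K + 1) * T)).
  enough (bform 1 (lin_error B y c T) (lin_error B y c T)
          <= (bform 1 (lin_error B y c 0) (lin_error B y c 0) + eta * eta * (Cd * Cd) / (2 * K + 1))
             * exp ((2 * K + 1) * T) - eta * eta * (Cd * Cd) / (2 * K + 1)) by lra.
  apply Hgron.
  - intros t Ht. apply bform_rderiv; [lra|]. unfold lin_error.
    apply curve_sub_scaled; [apply curve_sub; [apply HB|apply Hp0d]|apply Hy]; lra.
  - intros t Ht. destruct (HD t ltac:(lra)).
    apply (linearization_rate B y c t del K eta Cd); auto.
    + apply Htube; lra.
    + apply HKb; lra.
Qed.

End Tube.

Lemma solution_unique (phi0 B : R -> X n m) :
  (forall t, t >= 0 -> curve_deriv phi0 t (F (phi0 t))) -> (forall t, t >= 0 -> U (phi0 t)) ->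
  (forall t, t >= 0 -> curve_deriv B t (F (B t))) -> B 0 = phi0 0 ->
  forall t, t >= 0 -> B t = phi0 t.
Proof.
  intros Hp0d Hp0U HB H0 t Ht.
  destruct (bounded_jacobian_tube phi0 Hp0d Hp0U t ltac:(lra)) as [del [K [Hdel [HK Htube]]]].
  assert (Hstart : bform 1 (Xsub (B 0) (phi0 0)) (Xsub (B 0) (phi0 0)) = 0).
  { rewrite H0, <- Xnorm_sq. replace (Xsub (phi0 0) (phi0 0)) with (@Xzero n m) by Xext.
    rewrite Xnorm_Xzero. ring. }
  pose proof (nearby_solution phi0 Hp0d t del K B ltac:(lra) Hdel HK Htube HB) as Hnear.
  rewrite Hstart in Hnear. specialize (Hnear ltac:(nra) t ltac:(lra)).
  rewrite <- Xnorm_sq, Rmult_0_l in Hnear. apply Xnorm_zero_eq.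
  pose proof (Xnorm_pos _ _ (Xsub (B t) (phi0 t))). nra.
Qed.

(* The arithmetic closing the linearization estimate. *)
Lemma error_budget c rho Q S K sigma e0 eT : c > 0 -> rho > 0 -> Q >= 1 -> S >= 0 -> K >= 0 ->
  0 <= e0 -> e0 <= c * sigma -> 0 <= sigma <= rho / (2 * Q) -> 0 <= eT ->
  eT * eT <= (e0 * e0 + (rho / (2 * (S * Q + 1))) * (rho / (2 * (S * Q + 1))) * ((c * S) * (c * S)) / (2 * K + 1)) * Q ->
  eT < c * rho.
Proof.
  intros Hc Hrho HQ HS HK He0 He0s Hsig HeT Hbound. set (eta := rho / (2 * (S * Q + 1))) in *.
  assert (Hdiv : eta * eta * (c * S * (c * S)) / (2 * K + 1) <= eta * eta * (c * S * (c * S))).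
  { unfold Rdiv. rewrite <- (Rmult_1_r (eta * eta * (c * S * (c * S)))) at 2.
    apply Rmult_le_compat_l; [nra|]. rewrite <- Rinv_1. apply Rinv_le_contravar; lra. }
  assert (Hs1 : sigma * sigma * Q <= rho * rho / 4).
  { assert (sigma * Q <= rho / 2).
    { apply Rle_trans with (rho / (2 * Q) * Q); [apply Rmult_le_compat_r; lra|right; field; lra]. }
    assert (sigma <= rho / 2).
    { apply Rle_trans with (rho / (2 * Q)); [lra|]. unfold Rdiv.
      apply Rmult_le_compat_l; [lra|]. apply Rinv_le_contravar; lra. }
    nra. }
  assert (Hs2 : eta * eta * (S * S) * Q <= rho * rho / 4).
  { assert (Heta : eta * (S * Q + 1) = rho / 2) by (unfold eta; field; nra).
    assert (S * S * Q <= (S * Q + 1) * (S * Q + 1)) by nra.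
    assert (0 <= eta) by (unfold eta; apply Rmult_le_pos; [lra|left; apply Rinv_0_lt_compat; nra]).
    nra. }
  assert (eT * eT < c * rho * (c * rho)).
  { eapply Rle_lt_trans; [apply Hbound|].
    assert (e0 * e0 <= c * c * (sigma * sigma)) by nra.
    assert (Hcc : 0 < c * c) by nra.
    assert (c * c * (sigma * sigma * Q + eta * eta * (S * S) * Q) < c * c * (rho * rho))
      by (apply Rmult_lt_compat_l; nra).
    nra. }
  destruct (Rlt_le_dec eT (c * rho)) as [|Hge]; auto.
  assert (c * rho * (c * rho) <= eT * eT) by (apply Rmult_le_compat; nra). lra.
Qed.

(* Differentiability of the flow along phi0 in the direction of a solution y of
   the variational equation: a solution B whose initial offset is c (y(0) + o(1))
   has offset c (y(T) + o(1)) at time T. *)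
Lemma flow_linearization (phi0 y : R -> X n m) T :
  (forall t, t >= 0 -> curve_deriv phi0 t (F (phi0 t))) -> (forall t, t >= 0 -> U (phi0 t)) ->
  0 <= T -> (forall t, t >= 0 -> curve_deriv y t (DF (phi0 t) (y t))) ->
  forall rho, rho > 0 -> exists sigma c0, sigma > 0 /\ c0 > 0 /\
    forall c (B : R -> X n m), 0 < c < c0 -> (forall t, t >= 0 -> curve_deriv B t (F (B t))) ->
      Xnorm (Xsub (Xscale (/ c) (Xsub (B 0) (phi0 0))) (y 0)) < sigma ->
      Xnorm (Xsub (Xscale (/ c) (Xsub (B T) (phi0 T))) (y T)) < rho.
Proof.
  intros Hp0d Hp0U HT Hy rho Hrho.
  (* constants: the tube radius del0, a Jacobian bound K, the growth factors S
     and Q of the offset and of the linearization error, and the tolerance eta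
     on DF required in a thinner tube of radius deta *)
  destruct (bounded_jacobian_tube phi0 Hp0d Hp0U T HT) as [del0 [K [Hd0 [HK Htb]]]].
  assert (HKb : forall s, 0 <= s <= T -> jac_size (phi0 s) <= K).
  { intros s Hs. apply (Htb s Hs). replace (Xsub (phi0 s) (phi0 s)) with (@Xzero n m) by Xext.
    rewrite Xnorm_Xzero. lra. }
  set (Q := exp ((2 * K + 1) * T)).
  assert (HQ : Q >= 1).
  { pose proof (exp_mono 0 ((2 * K + 1) * T) ltac:(nra)). rewrite exp_0 in H. unfold Q. lra. }
  set (sigma := rho / (2 * Q)). assert (Hsig : sigma > 0) by (apply Rdiv_lt_0_compat; lra).
  set (R1 := Xnorm (y 0) + sigma). pose proof (Xnorm_pos _ _ (y 0)).
  set (S := R1 * sqrt (exp (2 * (K + 1) * T))).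
  assert (HS0 : 0 <= S) by (unfold S, R1; apply Rmult_le_pos; [lra|apply sqrt_pos]).
  set (eta := rho / (2 * (S * Q + 1))). assert (Heta : eta > 0) by (apply Rdiv_lt_0_compat; nra).
  destruct (jacobian_tube phi0 Hp0d Hp0U T eta HT Heta) as [deta [Hdeta Htube]].
  exists sigma, (Rmin deta (del0 / 2) / (S + 1)).
  split; [lra|]. split; [apply Rdiv_lt_0_compat; [apply Rmin_pos|]; lra|].
  intros c B Hc HB Hinit.
  assert (HcS : c * S < Rmin deta (del0 / 2)).
  { apply Rle_lt_trans with (c * (S + 1) - c); [lra|].
    apply Rlt_le_trans with (Rmin deta (del0 / 2) / (S + 1) * (S + 1)); [nra|right; field; lra]. }
  pose proof (Rmin_l deta (del0 / 2)). pose proof (Rmin_r deta (del0 / 2)).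
  assert (HE0 : Xnorm (lin_error phi0 B y c 0) <= c * sigma).
  { unfold lin_error. rewrite <- Xnorm_rescaled by lra. nra. }
  assert (Hstart : Xnorm (Xsub (B 0) (phi0 0)) <= c * R1).
  { replace (Xsub (B 0) (phi0 0)) with (Xadd (lin_error phi0 B y c 0) (Xscale c (y 0)))
      by (unfold lin_error; Xext).
    eapply Rle_trans; [apply Xnorm_add|]. rewrite Xnorm_scale, Rabs_pos_eq by lra. unfold R1. nra. }
  assert (Hclose : forall s, 0 <= s <= T -> Xnorm (Xsub (B s) (phi0 s)) <= c * S).
  { replace (c * S) with (c * R1 * sqrt (exp (2 * (K + 1) * T))) by (unfold S; ring).
    apply (nearby_solution_norm phi0 Hp0d T del0 K B); auto. unfold S in HcS. lra. }
  pose proof (linearization_error phi0 Hp0d T deta K eta (c * S) c B y HT HK Heta Htube HKb HB Hy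
                ltac:(intros s Hs; pose proof (Hclose s Hs); split; lra)) as Hlin.
  assert (Hsig2 : 0 <= sigma <= rho / (2 * Q)) by (split; [lra|unfold sigma; lra]).
  apply Rmult_lt_reg_r with c; [lra|]. rewrite Xnorm_rescaled, Rmult_comm by lra.
  apply (error_budget c rho Q S K sigma (Xnorm (lin_error phi0 B y c 0))); try lra.
  - apply Xnorm_pos.
  - apply Xnorm_pos.
  - exact Hlin.
Qed.

Definition tangent_vector (x0 v : X n m) : Prop :=
  forall rho c0, rho > 0 -> c0 > 0 -> exists x c, Gam x /\ 0 < c < c0 /\
    Xnorm (Xsub (Xscale (/ c) (Xsub x x0)) v) < rho.

(* Tangent vectors of Gamma lie in T(x0): transporting a secant of Gamma by the
   flow, it follows the variational solution y; if L(y(t), 0) > 0 for some t,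
   two points of Gamma would be strictly inside the Lorentz cone of each other. *)
Lemma tangent_in_T x0 v : Gam x0 -> tangent_vector x0 v -> in_T f g fa fz ga gz x0 v.
Proof.
  intros Hx0 Htan phi Hphi y Hy0 Hyd T HT. apply Rnot_lt_le. intros Hpos.
  destruct (HGinv x0 Hx0) as [phi0 [[H00 Hp0d] Hp0G]].
  assert (Hp0U : forall t, t >= 0 -> U (phi0 t)) by (intros; apply HGU, Hp0G; auto).
  destruct Hphi as [Hphi0 Hphid].
  assert (Hsame := solution_unique phi0 phi Hp0d Hp0U Hphid ltac:(congruence)).
  assert (Hy : forall t, t >= 0 -> curve_deriv y t (DF (phi0 t) (y t))).
  { intros t Ht. rewrite <- (Hsame t Ht). exact (Hyd t Ht). }
  assert (HY : bform (-1) (y T) (y T) > 0).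
  { rewrite Lf_bform, bform_sub_swap in Hpos.
    replace (Xsub (y T) Xzero) with (y T) in Hpos by Xext. exact Hpos. }
  destruct (lorentz_positive_open _ _ (y T) HY) as [rho [Hrho Hopen]].
  destruct (flow_linearization phi0 y T Hp0d Hp0U ltac:(lra) Hy rho Hrho) as [sigma [c0 [Hsig [Hc0 Hlin]]]].
  destruct (Htan sigma c0 Hsig Hc0) as [x [c [Hx [Hc Hsec]]]].
  destruct (HGinv x Hx) as [B [[HB0 HBd] HBG]].
  assert (Hu : bform (-1) (Xscale (/ c) (Xsub (B T) (phi0 T))) (Xscale (/ c) (Xsub (B T) (phi0 T))) > 0).
  { apply Hopen, (Hlin c B Hc HBd). rewrite HB0, H00, Hy0. exact Hsec. }
  rewrite bform_scalel, bform_scaler in Hu.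
  pose proof (gamma_lorentz_nonpos (phi0 T) (B T) (Hp0G T HT) (HBG T HT)) as Hle.
  rewrite Lf_bform in Hle.
  assert (0 < / c * / c) by (apply Rmult_lt_0_compat; apply Rinv_0_lt_compat; lra). nra.
Qed.

End VectorField.

Lemma not_frechet_sequence m n (h : vec m -> vec n) (z0 : vec m) (M : mat n m) r : r > 0 ->
  ~ frechet_deriv h z0 M -> exists eps (w : nat -> vec m), eps > 0 /\ forall k,
    (0 < vnorm (w k) < Rmin r (/ (INR k + 1))) /\
    eps * vnorm (w k) < vnorm (vsub (vsub (h (vadd z0 (w k))) (h z0)) (mapply M (w k))).
Proof.
  intros Hr Hno.
  assert (Hbad : exists eps, eps > 0 /\ forall del, del > 0 -> exists w, vnorm w < del /\
                   eps * vnorm w < vnorm (vsub (vsub (h (vadd z0 w)) (h z0)) (mapply M w))).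
  { apply NNPP. intros Hn2. apply Hno. intros eps Heps. apply NNPP. intros Hn3. apply Hn2.
    exists eps. split; auto. intros del Hdel. apply NNPP. intros Hn4. apply Hn3.
    exists del. split; auto. intros w Hw. apply Rnot_lt_le. intros Hlt. apply Hn4. exists w. auto. }
  destruct Hbad as [eps [Heps Hbad]].
  set (P := fun k w => vnorm w < Rmin r (/ (INR k + 1)) /\
                       eps * vnorm w < vnorm (vsub (vsub (h (vadd z0 w)) (h z0)) (mapply M w))).
  exists eps, (fun k => epsilon (inhabits vzero) (P k)). split; auto. intros k.
  assert (HP : P k (epsilon (inhabits vzero) (P k))).
  { apply epsilon_spec, Hbad. apply Rmin_pos; auto. apply Rinv_0_lt_compat. pose proof (pos_INR k); lra. }
  destruct HP as [Hsmall Herr]. set (w := epsilon (inhabits vzero) (P k)) in *.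
  split; [split|]; auto.
  (* w <> 0 since the error vanishes at w = 0 *)
  destruct (Req_dec (vnorm w) 0) as [E0|E0]; [|pose proof (vnorm_pos _ w); lra].
  exfalso. apply vnorm_zero_vec in E0. rewrite E0 in Herr.
  replace (vadd z0 vzero) with z0 in Herr by (vext; ring). rewrite mapply_zero in Herr.
  replace (vsub (vsub (h z0) (h z0)) vzero) with (@vzero n) in Herr by (vext; ring).
  rewrite !vnorm_vzero in Herr. lra.
Qed.

Lemma secant_direction_off_graph n m (h : vec m -> vec n) (z0 : vec m) (M : mat n m) r : r > 0 ->
  (forall w, vnorm w < r -> vnorm (vsub (h (vadd z0 w)) (h z0)) <= vnorm w) ->
  ~ frechet_deriv h z0 M ->
  exists v : X n m, fst v <> mapply M (snd v) /\
    forall rho c0, rho > 0 -> c0 > 0 -> exists w, vnorm w < r /\ 0 < vnorm w < c0 /\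
      Xnorm (Xsub (Xscale (/ vnorm w) (vsub (h (vadd z0 w)) (h z0), w)) v) < rho.
Proof.
  intros Hr Hlip Hno.
  destruct (not_frechet_sequence m n h z0 M r Hr Hno) as [eps [w [Heps Hw]]].
  assert (Hwr : forall k, vnorm (w k) < r)
    by (intros k; destruct (Hw k) as [[_ H] _]; pose proof (Rmin_l r (/ (INR k + 1))); lra).
  set (sec := fun k => Xscale (/ vnorm (w k)) (vsub (h (vadd z0 (w k))) (h z0), w k)).
  assert (Hsec : forall k, Xnorm (sec k) <= 2).
  { intros k. destruct (Hw k) as [[Hpos _] _]. unfold sec.
    rewrite Xnorm_scale, Rabs_pos_eq by (left; apply Rinv_0_lt_compat; lra).
    pose proof (Xnorm_le _ _ (vsub (h (vadd z0 (w k))) (h z0), w k)) as Hl. simpl in Hl.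
    pose proof (Hlip (w k) (Hwr k)).
    apply Rle_trans with (/ vnorm (w k) * (2 * vnorm (w k))).
    - apply Rmult_le_compat_l; [left; apply Rinv_0_lt_compat|]; lra.
    - right; field; lra. }
  destruct (bolzano_weierstrass_X _ _ sec 2 Hsec) as [v Hv].
  exists v. split.
  - intros Heq. pose proof (mnorm1_pos _ _ M).
    set (rho := eps / (mnorm1 M + 1)). assert (Hrho : rho > 0) by (apply Rdiv_lt_0_compat; lra).
    destruct (Hv rho Hrho 0%nat) as [k [_ Hk]]. destruct (Hw k) as [[Hpos _] Herr].
    pose proof (graph_defect_bound n m M (sec k) v Heq) as Hdef.
    (* the defect of sec k is the normalized linearization error, above eps *)
    replace (vsub (fst (sec k)) (mapply M (snd (sec k))))
      with (vscale (/ vnorm (w k)) (vsub (vsub (h (vadd z0 (w k))) (h z0)) (mapply M (w k)))) in Hdef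
      by (unfold sec, Xscale; simpl; rewrite mapply_scale; vext; ring).
    rewrite vnorm_scale, Rabs_pos_eq in Hdef by (left; apply Rinv_0_lt_compat; lra).
    assert (Hbig : / vnorm (w k) * vnorm (vsub (vsub (h (vadd z0 (w k))) (h z0)) (mapply M (w k))) > eps).
    { apply Rmult_lt_reg_l with (vnorm (w k)); auto. rewrite <- Rmult_assoc, Rinv_r by lra. lra. }
    assert ((mnorm1 M + 1) * rho = eps) by (unfold rho; field; lra).
    assert ((mnorm1 M + 1) * Xnorm (Xsub (sec k) v) < (mnorm1 M + 1) * rho) by (apply Rmult_lt_compat_l; lra).
    lra.
  - intros rho c0 Hrho Hc0. destruct (inv_succ_small c0 Hc0) as [N HN].
    destruct (Hv rho Hrho N) as [k [Hk Hvk]]. destruct (Hw k) as [[Hpos Hsmall] _].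
    exists (w k). split; [apply Hwr|]. split; [split; auto|exact Hvk].
    pose proof (Rmin_r r (/ (INR k + 1))). pose proof (HN k Hk). lra.
Qed.

Theorem lemma2p11 (n m : nat)
  (f : X n m -> vec n) (g : X n m -> vec m)
  (U Gam : X n m -> Prop)
  (* Hypothesis 1 *)
  (HUopen : is_open U) (HUconv : is_convex U)
  (d : R) (Hd : d > 0)
  (Hcone : forall x x', U x -> Ccone x x' -> U x' -> Bbox d x x')
  (* Hypothesis 2: f, g are C^1 on U with partial derivatives fa = D_a f, fz = D_z f,
     ga = D_a g, gz = D_z g *)
  (fa : X n m -> mat n n) (fz : X n m -> mat n m)
  (ga : X n m -> mat m n) (gz : X n m -> mat m m)
  (Hf : forall x, U x -> has_partials f x (fa x) (fz x))
  (Hg : forall x, U x -> has_partials g x (ga x) (gz x))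
  (Hfac : mcont_on U fa) (Hfzc : mcont_on U fz)
  (Hgac : mcont_on U ga) (Hgzc : mcont_on U gz)
  (alpha ell : X n m -> R) (c1 : R)
  (Halc : cont_on U alpha) (Hellc : cont_on U ell)
  (Hal : forall x, U x -> alpha x > 0) (Hell : forall x, U x -> ell x >= 0)
  (Hc1 : c1 > 0)
  (Hfa : forall x, U x -> forall a' : vec n,
     inner a' (mapply (fa x) a') >= alpha x * vnorm a' ^ 2)
  (Hgz : forall x, U x -> forall z' : vec m,
     inner z' (mapply (gz x) z') <= ell x * vnorm z' ^ 2)
  (Hgap : forall x, U x ->
     alpha x >= ell x + opnorm (fz x) + opnorm (ga x) + c1)
  (* Hypothesis 3 *)
  (HGU : forall x, Gam x -> U x)
  (HGinv : pos_invariant f g Gam)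
  (HGproj : forall z : vec m, (exists a, Gam (a, z)) <-> (exists a, U (a, z)))
  (* h : K -> R^n with Gamma = graph of h, K = Pi_perp(U) *)
  (h : vec m -> vec n)
  (Hh : forall x : X n m, Gam x <-> ((exists a, U (a, snd x)) /\ fst x = h (snd x)))
  (* H(x) : the linear map whose graph is T(x), for x in Gamma *)
  (H : X n m -> mat n m)
  (HH : forall x, Gam x -> forall v : X n m,
     in_T f g fa fz ga gz x v <-> fst v = mapply (H x) (snd v)) :
  forall z : vec m, (exists a, U (a, z)) -> frechet_deriv h z (H (h z, z)).
Proof.
  intros z0 [a0 Ua0]. set (x0 := (h z0, z0)).
  assert (Gx0 : Gam x0) by (apply Hh; split; [exists a0|]; auto).
  assert (Hincr : forall w, vsub (vadd z0 w) z0 = w) by (intros; vext; ring).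
  destruct (HUopen _ Ua0) as [r [Hr Hball]].
  assert (Hgraph : forall w, vnorm w < r -> Gam (h (vadd z0 w), vadd z0 w)).
  { intros w Hw. apply Hh. split; auto. exists a0. apply Hball.
    eapply Rle_lt_trans; [apply Xnorm_le|]. unfold Xsub; simpl.
    replace (vsub a0 a0) with (@vzero n) by (vext; ring).
    rewrite Hincr, vnorm_vzero. lra. }
  (* Gamma lies outside the Lorentz cones of its points: h is 1-Lipschitz *)
  assert (Hlip : forall w, vnorm w < r -> vnorm (vsub (h (vadd z0 w)) (h z0)) <= vnorm w).
  { intros w Hw. pose proof (gamma_lorentz_nonpos n m f g U fa fz ga gz Hf Hg Gam alpha ell c1 d
                   HUconv Hcone Hell Hc1 Hfa Hgz Hgap HGU HGinv x0 _ Gx0 (Hgraph w Hw)) as HL.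
    unfold Lf in HL. simpl in HL. rewrite Hincr in HL.
    apply le_of_sq; [apply vnorm_pos|]. nra. }
  (* a secant direction off the graph of H(x0) would be a tangent vector of
     Gamma outside T(x0) *)
  apply NNPP. intros Hno.
  destruct (secant_direction_off_graph n m h z0 (H x0) r Hr Hlip Hno) as [v [Hoff Hsec]].
  apply Hoff, (HH x0 Gx0 v).
  apply (tangent_in_T n m f g U fa fz ga gz Hf Hg Gam alpha ell c1 d HUconv Hcone Hell Hc1
           Hfa Hgz Hgap HGU HGinv HUopen Hfac Hfzc Hgac Hgzc x0 v Gx0).
  intros rho c0 Hrho Hc0. destruct (Hsec rho c0 Hrho Hc0) as [w [Hw [Hc Hclose]]].
  exists (h (vadd z0 w), vadd z0 w), (vnorm w). split; [apply Hgraph; auto|]. split; auto.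
  unfold Xsub at 2. simpl. rewrite Hincr. exact Hclose.
Qed.
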